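(* In the Setting below, the subalgebra $N_{\mathcal M}$ of $\mathcal M$ is a Lie algebra.
   Context: Setting. Let $\mathbb F$ be a field of characteristic different from $2$ and $3$. A Malcev algebra is an anticommutative algebra $\mathcal M$ over $\mathbb F$ satisfying $(xz)(yt)=((xy)z)t+((yz)t)x+((zt)x)y+((tx)y)z$. Products are left-normed: $xyz=(xy)z$, $xyzt=((xy)z)t$. Put $J(x,y,z)=xyz+yzx+zxy$ (the Jacobian), $\{x,y,z\}=xyz-xzy+2x(yz)$, and $h(y,z,t,x,u)=\{yz,t,u\}x+\{yz,t,x\}u+\{yx,z,u\}t+\{yu,z,x\}t$. The variety $\mathcal H$ consists of the Malcev algebras satisfying $h(y,z,t,x,u)=0$ identically. Let $L=\mathfrak{sl}_2(\mathbb F)$ with basis $E,H,F$ and products $EH=E$, $FH=-F$, $EF=\tfrac12 H$. Standing assumption: $\mathcal M\in\mathcal H$ contains $L$ as a subalgebra and $mL\neq 0$ for every $0\neq m\in\mathcal M$. Define $N_{\mathcal M}=\{m\in\mathcal M: J(m,a,b)=0\ \forall a,b\in L\}$ (a subalgebra of $\mathcal M$). *)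

From mathcomp Require Import all_boot all_order all_algebra.
Set Implicit Arguments. Unset Strict Implicit. Unset Printing Implicit Defensive.
Import GRing.Theory.
Local Open Scope ring_scope.

(* An algebra over the field F: an F-vector space M (lmodType F) together with
   a bilinear product [mul]. Products are left-normed in the paper. *)
Section Malcev.
Variables (F : fieldType) (M : lmodType F) (mul : M -> M -> M).

Definition bilinear_prod : Prop :=
  (forall (a : F) (x y z : M), mul (a *: x + y) z = a *: mul x z + mul y z) /\
  (forall (a : F) (x y z : M), mul z (a *: x + y) = a *: mul z x + mul z y).

Definition anticomm : Prop := forall x : M, mul x x = 0.

Definition malcev_identity : Prop :=
  forall x y z t : M,
    mul (mul x z) (mul y t) =
      mul (mul (mul x y) z) t + mul (mul (mul y z) t) x
      + mul (mul (mul z t) x) y + mul (mul (mul t x) y) z.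

Definition is_malcev : Prop := [/\ bilinear_prod, anticomm & malcev_identity].

Definition jacobian (x y z : M) : M :=
  mul (mul x y) z + mul (mul y z) x + mul (mul z x) y.

Definition brace (x y z : M) : M :=
  mul (mul x y) z - mul (mul x z) y + 2%:R *: mul x (mul y z).

Definition hpoly (y z t x u : M) : M :=
  mul (brace (mul y z) t u) x + mul (brace (mul y z) t x) u
  + mul (brace (mul y x) z u) t + mul (brace (mul y u) z x) t.

Definition in_variety_H : Prop :=
  is_malcev /\ forall y z t x u : M, hpoly y z t x u = 0.

Definition in_span3 (e h f m : M) : Prop :=
  exists a b c : F, m = a *: e + b *: h + c *: f.

(* e, h, f span a copy of sl_2(F) inside M: they are linearly independent and
   satisfy EH = E, FH = -F, EF = H/2 (then span3 is a subalgebra isomorphic to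
   sl_2 by bilinearity/anticommutativity). *)
Definition sl2_triple (e h f : M) : Prop :=
  [/\ (forall a b c : F, a *: e + b *: h + c *: f = 0 -> [/\ a = 0, b = 0 & c = 0]),
      mul e h = e, mul f h = - f & mul e f = 2%:R^-1 *: h].

Definition N_M (e h f m : M) : Prop :=
  forall a b : M, in_span3 e h f a -> in_span3 e h f b -> jacobian m a b = 0.

End Malcev.

(* Let M be a Malcev algebra over a field F of characteristic different from 2
   that contains L = sl_2 = <E, H, F> and in which mL <> 0 for every m <> 0.
   For x, y, z in N_M = {m | J(m, a, b) = 0 for all a, b in L} we show that
   J(x, y, z) = 0.  By the nondegeneracy hypothesis it suffices to prove
   J(x, y, z) a = 0 for a in the basis E, H, G of L, where G = 2F is chosen so
   that the multiplication table EH = E, GH = -G, EG = H is integral.  For each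
   such a, the element -8 J(x, y, z) a is an explicit integral combination of
   instances of the Malcev identity, of Jacobians J(n, b, c) with n in
   {x, y, z} and b, c in {E, H, G}, and of right multiples of these; these
   combinations (certificates) were found by computer. *)

From mathcomp Require Import all_boot all_order all_algebra.
Set Implicit Arguments. Unset Strict Implicit. Unset Printing Implicit Defensive.
Import GRing.Theory.
Local Open Scope ring_scope.

Section BilinearProduct.
Variables (F : fieldType) (M : lmodType F) (mul : M -> M -> M).
Hypothesis mulB : bilinear_prod mul.

Lemma mul0l z : mul 0 z = 0.
Proof.
have := mulB.1 1 0 0 z; rewrite !scale1r addr0 => double.
by apply: (addrI (mul 0 z)); rewrite addr0 -double.
Qed.

Lemma mul0r z : mul z 0 = 0.
Proof.
have := mulB.2 1 0 0 z; rewrite !scale1r addr0 => double.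
by apply: (addrI (mul z 0)); rewrite addr0 -double.
Qed.

Lemma mulZl a x z : mul (a *: x) z = a *: mul x z.
Proof. by have := mulB.1 a x 0 z; rewrite !addr0 mul0l addr0. Qed.

Lemma mulZr a x z : mul z (a *: x) = a *: mul z x.
Proof. by have := mulB.2 a x 0 z; rewrite !addr0 mul0r addr0. Qed.

Lemma mulDl x y z : mul (x + y) z = mul x z + mul y z.
Proof. by have := mulB.1 1 x y z; rewrite !scale1r. Qed.

Lemma mulDr x y z : mul z (x + y) = mul z x + mul z y.
Proof. by have := mulB.2 1 x y z; rewrite !scale1r. Qed.

Lemma mulrzl (c : int) x z : mul (x *~ c) z = mul x z *~ c.
Proof. by rewrite -scaler_int mulZl scaler_int. Qed.

Lemma mulrzr (c : int) x z : mul z (x *~ c) = mul z x *~ c.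
Proof. by rewrite -scaler_int mulZr scaler_int. Qed.

Hypothesis mulA : anticomm mul.

Lemma mul_anticomm x y : mul x y = - mul y x.
Proof.
have := mulA (x + y); rewrite mulDl !mulDr !mulA add0r addr0.
by move/eqP; rewrite addr_eq0 => /eqP.
Qed.

End BilinearProduct.

Inductive term := Var of nat | Prod of term & term.
Infix "⋅" := Prod (at level 40, left associativity).

Fixpoint term_eqb (a b : term) : bool :=
  match a, b with
  | Var i, Var j => i == j
  | a1 ⋅ a2, b1 ⋅ b2 => term_eqb a1 b1 && term_eqb a2 b2
  | _, _ => false
  end.

Lemma term_eqbP a b : term_eqb a b -> a = b.
Proof.
elim: a b => [i|a1 IH1 a2 IH2] [j|b1 b2] //= => [/eqP -> //|].
by case/andP => /IH1 -> /IH2 ->.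
Qed.

(* An order on terms, used to orient anticommuting products; soundness of
   the normalizer does not depend on its properties. *)
Fixpoint term_lt (a b : term) : bool :=
  match a, b with
  | Var i, Var j => (i < j)%N
  | Var _, _ ⋅ _ => true
  | _ ⋅ _, Var _ => false
  | a1 ⋅ a2, b1 ⋅ b2 => if term_eqb a1 b1 then term_lt a2 b2 else term_lt a1 b1
  end.

(* The variables 3, 4, 5 stand for the basis E, H, G = 2F of sl_2; the
   remaining variables are unconstrained. *)
Definition is_sl2 (i : nat) : bool := (2 < i < 6)%N.

Definition sl2_table (i j : nat) : option (int * term) :=
  match i, j with
  | 3, 4 => Some (1, Var 3) | 4, 3 => Some (-1, Var 3)
  | 5, 4 => Some (-1, Var 5) | 4, 5 => Some (1, Var 5)
  | 3, 5 => Some (1, Var 4) | 5, 3 => Some (-1, Var 4)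
  | _, _ => None
  end.

(* A normal monomial is [Some (c, t)], meaning c t, or [None], meaning 0.
   A generic product is oriented by [term_lt]; squares vanish. *)
Definition mul_generic (a b : term) : option (int * term) :=
  if term_eqb a b then None
  else if term_lt a b then Some (1, a ⋅ b) else Some (-1, b ⋅ a).

Definition mul_normal (a b : term) : option (int * term) :=
  match a, b with
  | Var i, Var j => if is_sl2 i && is_sl2 j then sl2_table i j else mul_generic a b
  | _, _ => mul_generic a b
  end.

Definition scale_monomial (k : int) (o : option (int * term)) :=
  if o is Some (c, t) then Some (k * c, t) else None.

Fixpoint normalize (t : term) : option (int * term) :=
  match t with
  | Var n => Some (1, Var n)
  | a ⋅ b =>
    match normalize a, normalize b with
    | Some (c, a'), Some (d, b') => scale_monomial (c * d) (mul_normal a' b')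
    | _, _ => None
    end
  end.

Definition comb := seq (int * term).

Fixpoint normalize_comb (p : comb) : comb :=
  match p with
  | [::] => [::]
  | (c, t) :: q =>
    if normalize t is Some (d, u) then (c * d, u) :: normalize_comb q
    else normalize_comb q
  end.

Fixpoint insert_monomial (ct : int * term) (p : comb) : comb :=
  match p with
  | [::] => [:: ct]
  | (d, u) :: q =>
    if term_eqb ct.2 u then (ct.1 + d, u) :: q else (d, u) :: insert_monomial ct q
  end.

Fixpoint collect (p acc : comb) : comb :=
  if p is ct :: q then collect q (insert_monomial ct acc) else acc.

Definition all_zero (p : comb) : bool := all (fun ct => ct.1 == 0) p.

Definition scale_comb (k : int) (p : comb) : comb := [seq (k * ct.1, ct.2) | ct <- p].

(* Relators: formal expressions known to vanish, namely instances of the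
   Malcev identity, Jacobians J(n, b, c) of a nucleus variable n (0, 1 or 2)
   with two sl_2 variables, and right multiples of relators. *)
Inductive relator :=
  | Malcev of term & term & term & term
  | Nucleus of term & term & term
  | RMul of relator & term.

Fixpoint relator_comb (r : relator) : comb :=
  match r with
  | Malcev x y z t =>
    [:: (1, (x ⋅ z) ⋅ (y ⋅ t)); (-1, x ⋅ y ⋅ z ⋅ t); (-1, y ⋅ z ⋅ t ⋅ x);
        (-1, z ⋅ t ⋅ x ⋅ y); (-1, t ⋅ x ⋅ y ⋅ z)]
  | Nucleus n b c => [:: (1, n ⋅ b ⋅ c); (1, b ⋅ c ⋅ n); (1, c ⋅ n ⋅ b)]
  | RMul r t => [seq (ct.1, ct.2 ⋅ t) | ct <- relator_comb r]
  end.

Definition nucleus_args (n b c : term) : bool :=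
  if (n, b, c) is (Var i, Var j, Var k) then [&& (i < 3)%N, is_sl2 j & is_sl2 k]
  else false.

Fixpoint relator_valid (r : relator) : bool :=
  match r with
  | Malcev _ _ _ _ => true
  | Nucleus n b c => nucleus_args n b c
  | RMul r _ => relator_valid r
  end.

(* [certifies C p]: the combination C of valid relators plus p normalizes to 0,
   so p vanishes in every algebra where the relators vanish. *)
Definition certifies (C : seq (int * relator)) (p : comb) : bool :=
  all (fun kr => relator_valid kr.2) C &&
  all_zero (collect (normalize_comb
    (flatten [seq scale_comb kr.1 (relator_comb kr.2) | kr <- C] ++ p)) [::]).

Section Soundness.
Variables (F : fieldType) (M : lmodType F) (mul : M -> M -> M) (env : nat -> M).
Hypotheses (mulB : bilinear_prod mul) (mulA : anticomm mul).

Fixpoint eval (t : term) : M :=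
  match t with Var n => env n | a ⋅ b => mul (eval a) (eval b) end.

Definition eval_monomial (o : option (int * term)) : M :=
  if o is Some (c, t) then eval t *~ c else 0.

Definition eval_comb (p : comb) : M := \sum_(ct <- p) eval ct.2 *~ ct.1.

Hypothesis env_table : forall i j, is_sl2 i -> is_sl2 j ->
  eval_monomial (sl2_table i j) = mul (env i) (env j).

Lemma eval_scale_monomial k o : eval_monomial (scale_monomial k o) = eval_monomial o *~ k.
Proof. by case: o => [[c t]|] /=; rewrite ?mul0rz // mulrzA mulrzAC. Qed.

Lemma eval_mul_generic a b : eval_monomial (mul_generic a b) = mul (eval a) (eval b).
Proof.
rewrite /mul_generic; case E: (term_eqb a b); first by rewrite (term_eqbP E) /= mulA.
case: (term_lt a b) => /=; first by rewrite mulr1z.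
by rewrite mulrN1z (mul_anticomm mulB mulA (eval b)) opprK.
Qed.

Lemma eval_mul_normal a b : eval_monomial (mul_normal a b) = mul (eval a) (eval b).
Proof.
case: a b => [i|? ?] [j|? ?]; rewrite /mul_normal; try exact: eval_mul_generic.
by case: (boolP (is_sl2 i && is_sl2 j)) => [/andP[] /env_table H /H|_] //;
  exact: eval_mul_generic.
Qed.

Lemma eval_normalize t : eval_monomial (normalize t) = eval t.
Proof.
elim: t => [n|a IHa b IHb] /=; first by rewrite mulr1z.
case: (normalize a) IHa => [[c a']|] /= <-; last by rewrite (mul0l mulB).
case: (normalize b) IHb => [[d b']|] /= <-; last by rewrite (mul0r mulB).
by rewrite eval_scale_monomial eval_mul_normal (mulrzl mulB) (mulrzr mulB) mulrzA mulrzAC.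
Qed.

Lemma eval_comb_cons ct p : eval_comb (ct :: p) = eval ct.2 *~ ct.1 + eval_comb p.
Proof. by rewrite /eval_comb big_cons. Qed.

Lemma eval_comb_cat p q : eval_comb (p ++ q) = eval_comb p + eval_comb q.
Proof. by rewrite /eval_comb big_cat. Qed.

Lemma eval_comb_nil : eval_comb [::] = 0.
Proof. by rewrite /eval_comb big_nil. Qed.

Lemma eval_normalize_comb p : eval_comb (normalize_comb p) = eval_comb p.
Proof.
elim: p => [|[c t] p IH] //=; rewrite eval_comb_cons /= -eval_normalize.
case: (normalize t) => [[d u]|] /=; last by rewrite IH mul0rz add0r.
by rewrite eval_comb_cons IH /= mulrzA mulrzAC.
Qed.

Lemma eval_insert_monomial ct p :
  eval_comb (insert_monomial ct p) = eval ct.2 *~ ct.1 + eval_comb p.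
Proof.
elim: p => [|[d u] p IH] /=; first by rewrite eval_comb_cons eval_comb_nil.
case: (boolP (term_eqb ct.2 u)) => [/term_eqbP eq_u|_].
  by rewrite !eval_comb_cons /= eq_u mulrzDr addrA.
by rewrite !eval_comb_cons IH /= addrCA.
Qed.

Lemma eval_collect p acc : eval_comb (collect p acc) = eval_comb p + eval_comb acc.
Proof.
elim: p acc => [|ct p IH] acc /=; first by rewrite eval_comb_nil add0r.
by rewrite IH eval_insert_monomial eval_comb_cons addrCA addrA.
Qed.

Lemma eval_all_zero p : all_zero p -> eval_comb p = 0.
Proof.
elim: p => [|[c t] p IH] /=; first by rewrite eval_comb_nil.
by case/andP => /eqP -> /IH; rewrite eval_comb_cons /= mulr0z add0r.
Qed.

Lemma eval_scale_comb k p : eval_comb (scale_comb k p) = eval_comb p *~ k.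
Proof.
elim: p => [|[c t] p IH] /=; first by rewrite eval_comb_nil mul0rz.
by rewrite !eval_comb_cons IH /= mulrzDl mulrzA mulrzAC.
Qed.

Lemma eval_comb_rmul t p :
  eval_comb [seq (ct.1, ct.2 ⋅ t) | ct <- p] = mul (eval_comb p) (eval t).
Proof.
elim: p => [|[c u] p IH] /=; first by rewrite !eval_comb_nil (mul0l mulB).
by rewrite !eval_comb_cons IH /= (mulDl mulB) (mulrzl mulB).
Qed.

Hypothesis malcevM : malcev_identity mul.
Hypothesis env_nucleus : forall i j k, (i < 3)%N -> is_sl2 j -> is_sl2 k ->
  jacobian mul (env i) (env j) (env k) = 0.

Lemma relator_sound r : relator_valid r -> eval_comb (relator_comb r) = 0.
Proof.
elim: r => [x y z t|n b c|r IH t] /=.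
- move=> _; rewrite /eval_comb !big_cons big_nil /= mulr1z !mulrN1z addr0 malcevM.
  by rewrite -!opprD !addrA subrr.
- case: n b c => [i|? ?] [j|? ?] [k|? ?] //= /and3P[lt_i3 Lj Lk].
  rewrite /eval_comb !big_cons big_nil /= !mulr1z addr0 addrA.
  exact: env_nucleus.
- by move/IH; rewrite eval_comb_rmul => ->; rewrite (mul0l mulB).
Qed.

Lemma certifies_sound C p : certifies C p -> eval_comb p = 0.
Proof.
case/andP=> valid_C /eval_all_zero.
rewrite eval_collect eval_comb_nil addr0 eval_normalize_comb eval_comb_cat.
suff -> : eval_comb (flatten [seq scale_comb kr.1 (relator_comb kr.2) | kr <- C]) = 0.
  by rewrite add0r.
elim: C valid_C => [|[k r] C IH] /=; first by rewrite eval_comb_nil.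
case/andP=> /relator_sound r_eq0 /IH C_eq0.
by rewrite eval_comb_cat eval_scale_comb r_eq0 C_eq0 mul0rz add0r.
Qed.

End Soundness.

Notation tx := (Var 0).
Notation ty := (Var 1).
Notation tz := (Var 2).
Notation tE := (Var 3).
Notation tH := (Var 4).
Notation tG := (Var 5).

Definition jacobian_times (a : term) : comb :=
  [:: (-8, tx ⋅ ty ⋅ tz ⋅ a); (-8, ty ⋅ tz ⋅ tx ⋅ a); (-8, tz ⋅ tx ⋅ ty ⋅ a)].

Lemma eval_jacobian_times (F : fieldType) (M : lmodType F) (mul : M -> M -> M)
    (env : nat -> M) a :
  bilinear_prod mul ->
  eval_comb mul env (jacobian_times a) =
    mul (jacobian mul (env 0%N) (env 1%N) (env 2%N)) (eval mul env a) *~ -8.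
Proof.
move=> mulB; rewrite /eval_comb !big_cons big_nil /= addr0 /jacobian !(mulDl mulB).
by rewrite !mulrzDl addrA.
Qed.

Definition certificate_E : seq (int * relator) := [::
  (-12, Malcev tx ty tz tE);
  (-4, Malcev tx tz ty tE);
  (20, Malcev tx tE ty tz);
  (12, Malcev tx tz tE ty);
  (-4, Malcev (tx ⋅ ty) tz tE tH);
  (-10, Malcev (tx ⋅ ty) tE tz tH);
  (6, Malcev (tx ⋅ ty) tH tz tE);
  (-4, Malcev (tx ⋅ ty) tE tH tz);
  (-8, Malcev tx (ty ⋅ tz) tE tH);
  (-24, Malcev tx ty (tE ⋅ tz) tH);
  (24, Malcev tx ty (tH ⋅ tz) tE);
  (-12, Malcev tx (tE ⋅ ty) tz tH);
  (12, Malcev tx (tH ⋅ ty) tz tE);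
  (35, Malcev (tE ⋅ tx) ty tz tH);
  (-35, Malcev (tH ⋅ tx) ty tz tE);
  (28, Malcev tx ty tE (tH ⋅ tz));
  (-28, Malcev tx ty tH (tE ⋅ tz));
  (14, Malcev tx (tE ⋅ ty) tH tz);
  (-14, Malcev tx (tH ⋅ ty) tE tz);
  (13, Malcev (tE ⋅ tx) ty tH tz);
  (-9, Malcev (tH ⋅ tx) ty tE tz);
  (-6, Malcev (tx ⋅ tz) tE ty tH);
  (6, Malcev (tx ⋅ tz) tH ty tE);
  (2, Malcev tx tz (tE ⋅ ty) tH);
  (-2, Malcev tx tz (tH ⋅ ty) tE);
  (-38, Malcev tx (tE ⋅ tz) ty tH);
  (38, Malcev tx (tH ⋅ tz) ty tE);
  (28, Malcev (tE ⋅ tx) tz ty tH);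
  (-24, Malcev (tH ⋅ tx) tz ty tE);
  (-18, Malcev tx tE (ty ⋅ tz) tH);
  (10, Malcev tx tH (ty ⋅ tz) tE);
  (14, Malcev tx tE ty (tH ⋅ tz));
  (-14, Malcev tx tH ty (tE ⋅ tz));
  (6, Malcev tx tE (tH ⋅ ty) tz);
  (-6, Malcev tx tH (tE ⋅ ty) tz);
  (23, Malcev (tE ⋅ tx) tH ty tz);
  (-23, Malcev (tH ⋅ tx) tE ty tz);
  (2, Malcev tx tz tE (tH ⋅ ty));
  (-2, Malcev tx tz tH (tE ⋅ ty));
  (-8, Malcev tx (tE ⋅ tz) tH ty);
  (8, Malcev tx (tH ⋅ tz) tE ty);
  (30, Malcev (tE ⋅ tx) tz tH ty);
  (-30, Malcev (tH ⋅ tx) tz tE ty);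
  (-8, Malcev tx tE tH (ty ⋅ tz));
  (-44, RMul (Nucleus tx tE tH) (ty ⋅ tz));
  (24, RMul (Nucleus ty tE tH) (tx ⋅ tz));
  (40, RMul (Nucleus tz tE tH) (tx ⋅ ty));
  (24, RMul (Malcev tx ty tE tH) tz);
  (-20, RMul (Malcev tx ty tH tE) tz);
  (4, RMul (Malcev tx tE ty tH) tz);
  (4, RMul (Malcev tx tE tH ty) tz);
  (20, RMul (RMul (Nucleus tx tE tH) ty) tz);
  (20, RMul (RMul (Nucleus ty tE tH) tx) tz);
  (12, RMul (Malcev tx tz tE tH) ty);
  (-12, RMul (Malcev tx tz tH tE) ty);
  (-4, RMul (Malcev tx tE tz tH) ty);
  (4, RMul (Malcev tx tH tz tE) ty);
  (24, RMul (RMul (Nucleus tx tE tH) tz) ty);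
  (12, RMul (RMul (Nucleus tz tE tH) tx) ty);
  (-20, RMul (Malcev ty tz tE tH) tx);
  (20, RMul (Malcev ty tz tH tE) tx);
  (-20, RMul (RMul (Nucleus ty tE tH) tz) tx);
  (-12, RMul (RMul (Nucleus tz tE tH) ty) tx);
  (-10, Malcev (tE ⋅ (tx ⋅ ty)) tz tE tG);
  (10, Malcev (tH ⋅ (tx ⋅ ty)) tz tE tH);
  (10, Malcev (tx ⋅ (tE ⋅ ty)) tz tE tG);
  (-10, Malcev (tx ⋅ (tH ⋅ ty)) tz tE tH);
  (5, Malcev (ty ⋅ (tE ⋅ tx)) tz tE tG);
  (-5, Malcev (ty ⋅ (tH ⋅ tx)) tz tE tH);
  (-10, Malcev (tx ⋅ ty) tE (tE ⋅ tz) tG);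
  (10, Malcev (tx ⋅ ty) tE (tG ⋅ tz) tE);
  (10, Malcev (tx ⋅ ty) tH (tE ⋅ tz) tH);
  (-10, Malcev (tx ⋅ ty) tH (tH ⋅ tz) tE);
  (-10, Malcev (tE ⋅ (tx ⋅ ty)) tG tz tE);
  (10, Malcev (tH ⋅ (tx ⋅ ty)) tH tz tE);
  (10, Malcev (tx ⋅ (tE ⋅ ty)) tG tz tE);
  (-10, Malcev (tx ⋅ (tH ⋅ ty)) tH tz tE);
  (5, Malcev (ty ⋅ (tE ⋅ tx)) tG tz tE);
  (-5, Malcev (ty ⋅ (tH ⋅ tx)) tH tz tE);
  (-10, Malcev (tE ⋅ (tx ⋅ ty)) tE tG tz);
  (10, Malcev (tH ⋅ (tx ⋅ ty)) tE tH tz);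
  (10, Malcev (tx ⋅ (tE ⋅ ty)) tE tG tz);
  (-10, Malcev (tx ⋅ (tH ⋅ ty)) tE tH tz);
  (5, Malcev (ty ⋅ (tE ⋅ tx)) tE tG tz);
  (-5, Malcev (ty ⋅ (tH ⋅ tx)) tE tH tz);
  (-6, Malcev (tE ⋅ (tx ⋅ tz)) ty tE tG);
  (6, Malcev (tH ⋅ (tx ⋅ tz)) ty tE tH);
  (10, Malcev (tx ⋅ (tE ⋅ tz)) ty tE tG);
  (-10, Malcev (tx ⋅ (tH ⋅ tz)) ty tE tH);
  (15, Malcev (tz ⋅ (tE ⋅ tx)) ty tE tG);
  (-15, Malcev (tz ⋅ (tH ⋅ tx)) ty tE tH);
  (10, Malcev tx (tE ⋅ (ty ⋅ tz)) tE tG);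
  (-10, Malcev tx (tH ⋅ (ty ⋅ tz)) tE tH);
  (14, Malcev tx (ty ⋅ (tE ⋅ tz)) tE tG);
  (-14, Malcev tx (ty ⋅ (tH ⋅ tz)) tE tH);
  (-6, Malcev tx (tz ⋅ (tE ⋅ ty)) tE tG);
  (6, Malcev tx (tz ⋅ (tH ⋅ ty)) tE tH);
  (5, Malcev (tE ⋅ tx) (ty ⋅ tz) tE tG);
  (-5, Malcev (tH ⋅ tx) (ty ⋅ tz) tE tH);
  (-10, Malcev tx ty (tE ⋅ (tG ⋅ tz)) tE);
  (10, Malcev tx ty (tE ⋅ (tH ⋅ tz)) tH);
  (10, Malcev tx ty (tG ⋅ (tE ⋅ tz)) tE);
  (-10, Malcev tx ty (tH ⋅ (tE ⋅ tz)) tH);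
  (-6, Malcev tx (tE ⋅ (tG ⋅ ty)) tz tE);
  (6, Malcev tx (tE ⋅ (tH ⋅ ty)) tz tH);
  (6, Malcev tx (tG ⋅ (tE ⋅ ty)) tz tE);
  (-6, Malcev tx (tH ⋅ (tE ⋅ ty)) tz tH);
  (5, Malcev (tE ⋅ tx) ty (tE ⋅ tz) tG);
  (-5, Malcev (tE ⋅ tx) ty (tG ⋅ tz) tE);
  (-5, Malcev (tH ⋅ tx) ty (tE ⋅ tz) tH);
  (5, Malcev (tH ⋅ tx) ty (tH ⋅ tz) tE);
  (-5, Malcev (tE ⋅ tx) (tE ⋅ ty) tz tG);
  (5, Malcev (tE ⋅ tx) (tG ⋅ ty) tz tE);
  (5, Malcev (tH ⋅ tx) (tE ⋅ ty) tz tH);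
  (-5, Malcev (tH ⋅ tx) (tH ⋅ ty) tz tE);
  (-5, Malcev (tE ⋅ (tE ⋅ tx)) ty tz tG);
  (24, Malcev (tE ⋅ (tG ⋅ tx)) ty tz tE);
  (-19, Malcev (tE ⋅ (tH ⋅ tx)) ty tz tH);
  (-19, Malcev (tG ⋅ (tE ⋅ tx)) ty tz tE);
  (24, Malcev (tH ⋅ (tE ⋅ tx)) ty tz tH);
  (-5, Malcev (tH ⋅ (tH ⋅ tx)) ty tz tE);
  (-10, Malcev tx ty tE (tE ⋅ (tG ⋅ tz)));
  (10, Malcev tx ty tE (tG ⋅ (tE ⋅ tz)));
  (10, Malcev tx ty tH (tE ⋅ (tH ⋅ tz)));
  (-10, Malcev tx ty tH (tH ⋅ (tE ⋅ tz)));
  (-10, Malcev tx (tE ⋅ ty) tH (tH ⋅ tz));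
  (10, Malcev tx (tE ⋅ ty) tG (tE ⋅ tz));
  (-10, Malcev tx (tG ⋅ ty) tE (tE ⋅ tz));
  (10, Malcev tx (tH ⋅ ty) tE (tH ⋅ tz));
  (-5, Malcev (tE ⋅ tx) ty tE (tG ⋅ tz));
  (14, Malcev (tE ⋅ tx) ty tH (tH ⋅ tz));
  (-9, Malcev (tE ⋅ tx) ty tG (tE ⋅ tz));
  (14, Malcev (tG ⋅ tx) ty tE (tE ⋅ tz));
  (-9, Malcev (tH ⋅ tx) ty tE (tH ⋅ tz));
  (-5, Malcev (tH ⋅ tx) ty tH (tE ⋅ tz));
  (-16, Malcev (tE ⋅ tx) (tE ⋅ ty) tG tz);
  (10, Malcev (tE ⋅ tx) (tG ⋅ ty) tE tz);
  (6, Malcev (tE ⋅ tx) (tH ⋅ ty) tH tz);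
  (6, Malcev (tG ⋅ tx) (tE ⋅ ty) tE tz);
  (10, Malcev (tH ⋅ tx) (tE ⋅ ty) tH tz);
  (-16, Malcev (tH ⋅ tx) (tH ⋅ ty) tE tz);
  (-10, Malcev (tE ⋅ (tE ⋅ tx)) ty tG tz);
  (10, Malcev (tE ⋅ (tG ⋅ tx)) ty tE tz);
  (-4, Malcev (tE ⋅ (tH ⋅ tx)) ty tH tz);
  (14, Malcev (tH ⋅ (tE ⋅ tx)) ty tH tz);
  (-10, Malcev (tH ⋅ (tH ⋅ tx)) ty tE tz);
  (-6, Malcev (tx ⋅ tz) tE (tE ⋅ ty) tG);
  (6, Malcev (tx ⋅ tz) tE (tG ⋅ ty) tE);
  (6, Malcev (tx ⋅ tz) tH (tE ⋅ ty) tH);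
  (-6, Malcev (tx ⋅ tz) tH (tH ⋅ ty) tE);
  (-6, Malcev (tE ⋅ (tx ⋅ tz)) tG ty tE);
  (6, Malcev (tH ⋅ (tx ⋅ tz)) tH ty tE);
  (10, Malcev (tx ⋅ (tE ⋅ tz)) tG ty tE);
  (-10, Malcev (tx ⋅ (tH ⋅ tz)) tH ty tE);
  (15, Malcev (tz ⋅ (tE ⋅ tx)) tG ty tE);
  (-15, Malcev (tz ⋅ (tH ⋅ tx)) tH ty tE);
  (-6, Malcev tx tz (tE ⋅ (tG ⋅ ty)) tE);
  (6, Malcev tx tz (tE ⋅ (tH ⋅ ty)) tH);
  (6, Malcev tx tz (tG ⋅ (tE ⋅ ty)) tE);
  (-6, Malcev tx tz (tH ⋅ (tE ⋅ ty)) tH);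
  (-10, Malcev tx (tE ⋅ (tG ⋅ tz)) ty tE);
  (10, Malcev tx (tE ⋅ (tH ⋅ tz)) ty tH);
  (10, Malcev tx (tG ⋅ (tE ⋅ tz)) ty tE);
  (-10, Malcev tx (tH ⋅ (tE ⋅ tz)) ty tH);
  (-1, Malcev (tE ⋅ tx) tz (tE ⋅ ty) tG);
  (-5, Malcev (tE ⋅ tx) tz (tG ⋅ ty) tE);
  (6, Malcev (tE ⋅ tx) tz (tH ⋅ ty) tH);
  (6, Malcev (tG ⋅ tx) tz (tE ⋅ ty) tE);
  (-5, Malcev (tH ⋅ tx) tz (tE ⋅ ty) tH);
  (-1, Malcev (tH ⋅ tx) tz (tH ⋅ ty) tE);
  (-9, Malcev (tE ⋅ tx) (tE ⋅ tz) ty tG);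
  (-5, Malcev (tE ⋅ tx) (tG ⋅ tz) ty tE);
  (14, Malcev (tE ⋅ tx) (tH ⋅ tz) ty tH);
  (14, Malcev (tG ⋅ tx) (tE ⋅ tz) ty tE);
  (-5, Malcev (tH ⋅ tx) (tE ⋅ tz) ty tH);
  (-9, Malcev (tH ⋅ tx) (tH ⋅ tz) ty tE);
  (-10, Malcev (tE ⋅ (tE ⋅ tx)) tz ty tG);
  (10, Malcev (tE ⋅ (tG ⋅ tx)) tz ty tE);
  (-4, Malcev (tE ⋅ (tH ⋅ tx)) tz ty tH);
  (14, Malcev (tH ⋅ (tE ⋅ tx)) tz ty tH);
  (-10, Malcev (tH ⋅ (tH ⋅ tx)) tz ty tE);
  (10, Malcev tx tE (tE ⋅ (ty ⋅ tz)) tG);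
  (-10, Malcev tx tE (tH ⋅ (ty ⋅ tz)) tH);
  (14, Malcev tx tE (ty ⋅ (tE ⋅ tz)) tG);
  (-14, Malcev tx tE (ty ⋅ (tH ⋅ tz)) tH);
  (-6, Malcev tx tE (tz ⋅ (tE ⋅ ty)) tG);
  (6, Malcev tx tE (tz ⋅ (tH ⋅ ty)) tH);
  (5, Malcev (tE ⋅ tx) tE (ty ⋅ tz) tG);
  (-10, Malcev (tE ⋅ tx) tH (ty ⋅ tz) tH);
  (10, Malcev (tE ⋅ tx) tG (ty ⋅ tz) tE);
  (-10, Malcev (tG ⋅ tx) tE (ty ⋅ tz) tE);
  (5, Malcev (tH ⋅ tx) tE (ty ⋅ tz) tH);
  (14, Malcev (tE ⋅ tx) tH ty (tH ⋅ tz));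
  (-14, Malcev (tE ⋅ tx) tG ty (tE ⋅ tz));
  (14, Malcev (tG ⋅ tx) tE ty (tE ⋅ tz));
  (-14, Malcev (tH ⋅ tx) tE ty (tH ⋅ tz));
  (6, Malcev (tE ⋅ tx) tH (tH ⋅ ty) tz);
  (-6, Malcev (tE ⋅ tx) tG (tE ⋅ ty) tz);
  (6, Malcev (tG ⋅ tx) tE (tE ⋅ ty) tz);
  (-6, Malcev (tH ⋅ tx) tE (tH ⋅ ty) tz);
  (-5, Malcev (tE ⋅ (tE ⋅ tx)) tG ty tz);
  (10, Malcev (tE ⋅ (tG ⋅ tx)) tE ty tz);
  (-5, Malcev (tE ⋅ (tH ⋅ tx)) tH ty tz);
  (-5, Malcev (tG ⋅ (tE ⋅ tx)) tE ty tz);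
  (10, Malcev (tH ⋅ (tE ⋅ tx)) tH ty tz);
  (-5, Malcev (tH ⋅ (tH ⋅ tx)) tE ty tz);
  (-6, Malcev (tE ⋅ (tx ⋅ tz)) tE tG ty);
  (6, Malcev (tH ⋅ (tx ⋅ tz)) tE tH ty);
  (10, Malcev (tx ⋅ (tE ⋅ tz)) tE tG ty);
  (-10, Malcev (tx ⋅ (tH ⋅ tz)) tE tH ty);
  (15, Malcev (tz ⋅ (tE ⋅ tx)) tE tG ty);
  (-15, Malcev (tz ⋅ (tH ⋅ tx)) tE tH ty);
  (-6, Malcev tx tz tE (tE ⋅ (tG ⋅ ty)));
  (6, Malcev tx tz tE (tG ⋅ (tE ⋅ ty)));
  (6, Malcev tx tz tH (tE ⋅ (tH ⋅ ty)));
  (-6, Malcev tx tz tH (tH ⋅ (tE ⋅ ty)));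
  (-10, Malcev tx (tE ⋅ tz) tH (tH ⋅ ty));
  (10, Malcev tx (tE ⋅ tz) tG (tE ⋅ ty));
  (-10, Malcev tx (tG ⋅ tz) tE (tE ⋅ ty));
  (10, Malcev tx (tH ⋅ tz) tE (tH ⋅ ty));
  (5, Malcev (tE ⋅ tx) tz tE (tG ⋅ ty));
  (-5, Malcev (tE ⋅ tx) tz tG (tE ⋅ ty));
  (-5, Malcev (tH ⋅ tx) tz tE (tH ⋅ ty));
  (5, Malcev (tH ⋅ tx) tz tH (tE ⋅ ty));
  (-5, Malcev (tE ⋅ (tE ⋅ tx)) tz tG ty);
  (24, Malcev (tE ⋅ (tG ⋅ tx)) tz tE ty);
  (-19, Malcev (tE ⋅ (tH ⋅ tx)) tz tH ty);
  (-19, Malcev (tG ⋅ (tE ⋅ tx)) tz tE ty);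
  (24, Malcev (tH ⋅ (tE ⋅ tx)) tz tH ty);
  (-5, Malcev (tH ⋅ (tH ⋅ tx)) tz tE ty);
  (-10, Malcev tx tE tH (tH ⋅ (ty ⋅ tz)));
  (-14, Malcev tx tE tH (ty ⋅ (tH ⋅ tz)));
  (6, Malcev tx tE tH (tz ⋅ (tH ⋅ ty)));
  (10, Malcev tx tE tG (tE ⋅ (ty ⋅ tz)));
  (14, Malcev tx tE tG (ty ⋅ (tE ⋅ tz)));
  (-6, Malcev tx tE tG (tz ⋅ (tE ⋅ ty)));
  (5, Malcev (tE ⋅ tx) tE tG (ty ⋅ tz));
  (-5, Malcev (tH ⋅ tx) tE tH (ty ⋅ tz));
  (-24, RMul (Nucleus tx tE tH) (ty ⋅ (tH ⋅ tz)));
  (-4, RMul (Nucleus tx tE tH) (tz ⋅ (tH ⋅ ty)));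
  (-4, RMul (Nucleus tx tE tG) (tE ⋅ (ty ⋅ tz)));
  (24, RMul (Nucleus tx tE tG) (ty ⋅ (tE ⋅ tz)));
  (4, RMul (Malcev tx tE tE tG) (ty ⋅ tz));
  (14, RMul (Malcev tx tE tG tE) (ty ⋅ tz));
  (10, RMul (Malcev tx tH tE tH) (ty ⋅ tz));
  (-4, RMul (Nucleus ty tE tH) (tx ⋅ (tH ⋅ tz)));
  (-16, RMul (Nucleus ty tE tH) (tz ⋅ (tH ⋅ tx)));
  (4, RMul (Nucleus ty tE tG) (tx ⋅ (tE ⋅ tz)));
  (16, RMul (Nucleus ty tE tG) (tz ⋅ (tE ⋅ tx)));
  (-6, RMul (Malcev ty tE tG tE) (tx ⋅ tz));
  (-6, RMul (Malcev ty tH tE tH) (tx ⋅ tz));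
  (-20, RMul (Nucleus tz tE tH) (ty ⋅ (tH ⋅ tx)));
  (20, RMul (Nucleus tz tE tG) (ty ⋅ (tE ⋅ tx)));
  (-10, RMul (Malcev tz tE tG tE) (tx ⋅ ty));
  (-10, RMul (Malcev tz tH tE tH) (tx ⋅ ty));
  (14, RMul (Malcev tx ty tE tH) (tH ⋅ tz));
  (-14, RMul (Malcev tx ty tE tG) (tE ⋅ tz));
  (10, RMul (Malcev tx ty tH tE) (tH ⋅ tz));
  (-10, RMul (Malcev tx ty tG tE) (tE ⋅ tz));
  (-10, RMul (Malcev tx tE ty tE) (tG ⋅ tz));
  (24, RMul (Malcev tx tE ty tH) (tH ⋅ tz));
  (-14, RMul (Malcev tx tE ty tG) (tE ⋅ tz));
  (10, RMul (Malcev tx tH ty tE) (tH ⋅ tz));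
  (-10, RMul (Malcev tx tH ty tH) (tE ⋅ tz));
  (24, RMul (Malcev tx tE tH ty) (tH ⋅ tz));
  (-24, RMul (Malcev tx tE tG ty) (tE ⋅ tz));
  (4, RMul (RMul (Nucleus tx tE tH) ty) (tH ⋅ tz));
  (-4, RMul (RMul (Nucleus ty tE tH) tx) (tH ⋅ tz));
  (4, RMul (RMul (Nucleus ty tE tG) tx) (tE ⋅ tz));
  (4, RMul (Malcev tx (tE ⋅ ty) tE tG) tz);
  (-4, RMul (Malcev tx (tH ⋅ ty) tE tH) tz);
  (4, RMul (Malcev tx tE (tE ⋅ ty) tG) tz);
  (-4, RMul (Malcev tx tE (tH ⋅ ty) tH) tz);
  (-10, RMul (Malcev (tE ⋅ tx) tE ty tG) tz);
  (-10, RMul (Malcev (tE ⋅ tx) tH ty tH) tz);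
  (20, RMul (Malcev (tE ⋅ tx) tG ty tE) tz);
  (-10, RMul (Malcev (tG ⋅ tx) tE ty tE) tz);
  (20, RMul (Malcev (tH ⋅ tx) tE ty tH) tz);
  (-10, RMul (Malcev (tH ⋅ tx) tH ty tE) tz);
  (-4, RMul (Malcev tx tE tH (tH ⋅ ty)) tz);
  (4, RMul (Malcev tx tE tG (tE ⋅ ty)) tz);
  (-20, RMul (RMul (Nucleus tx tE tH) (tH ⋅ ty)) tz);
  (24, RMul (RMul (Nucleus tx tE tG) (tE ⋅ ty)) tz);
  (-24, RMul (RMul (Malcev tx tE tE tG) ty) tz);
  (24, RMul (RMul (Malcev tx tE tH tH) ty) tz);
  (-4, RMul (RMul (Malcev tx tE tG tE) ty) tz);
  (20, RMul (RMul (Malcev tx tH tE tH) ty) tz);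
  (-4, RMul (RMul (Nucleus ty tE tH) (tH ⋅ tx)) tz);
  (4, RMul (RMul (Nucleus ty tE tG) (tE ⋅ tx)) tz);
  (24, RMul (RMul (RMul (Nucleus tx tE tH) ty) tH) tz);
  (-20, RMul (RMul (RMul (Nucleus tx tE tG) ty) tE) tz);
  (-6, RMul (Malcev tx tz tE tH) (tH ⋅ ty));
  (6, RMul (Malcev tx tz tE tG) (tE ⋅ ty));
  (6, RMul (Malcev tx tz tH tE) (tH ⋅ ty));
  (-6, RMul (Malcev tx tz tG tE) (tE ⋅ ty));
  (-10, RMul (Malcev tx tE tz tE) (tG ⋅ ty));
  (10, RMul (Malcev tx tE tz tG) (tE ⋅ ty));
  (10, RMul (Malcev tx tH tz tE) (tH ⋅ ty));
  (-10, RMul (Malcev tx tH tz tH) (tE ⋅ ty));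
  (20, RMul (RMul (Nucleus tx tE tH) tz) (tH ⋅ ty));
  (-20, RMul (RMul (Nucleus tx tE tG) tz) (tE ⋅ ty));
  (4, RMul (RMul (Nucleus tz tE tH) tx) (tH ⋅ ty));
  (-4, RMul (RMul (Nucleus tz tE tG) tx) (tE ⋅ ty));
  (14, RMul (Malcev (tE ⋅ tx) tH tz tH) ty);
  (-14, RMul (Malcev (tE ⋅ tx) tG tz tE) ty);
  (14, RMul (Malcev (tG ⋅ tx) tE tz tE) ty);
  (-14, RMul (Malcev (tH ⋅ tx) tE tz tH) ty);
  (24, RMul (RMul (Nucleus tx tE tH) (tH ⋅ tz)) ty);
  (-28, RMul (RMul (Nucleus tx tE tG) (tE ⋅ tz)) ty);
  (4, RMul (RMul (Malcev tx tE tE tG) tz) ty);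
  (-4, RMul (RMul (Malcev tx tH tE tH) tz) ty);
  (24, RMul (RMul (Nucleus tz tE tH) (tH ⋅ tx)) ty);
  (-24, RMul (RMul (Nucleus tz tE tG) (tE ⋅ tx)) ty);
  (10, RMul (Malcev ty tz tE tH) (tH ⋅ tx));
  (-10, RMul (Malcev ty tz tE tG) (tE ⋅ tx));
  (-10, RMul (Malcev ty tz tH tE) (tH ⋅ tx));
  (10, RMul (Malcev ty tz tG tE) (tE ⋅ tx));
  (-16, RMul (RMul (Nucleus ty tE tH) tz) (tH ⋅ tx));
  (16, RMul (RMul (Nucleus ty tE tG) tz) (tE ⋅ tx));
  (4, RMul (RMul (Nucleus ty tE tH) (tH ⋅ tz)) tx);
  (-4, RMul (RMul (Nucleus ty tE tG) (tE ⋅ tz)) tx)].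

Definition certificate_H : seq (int * relator) := [::
  (-12, Malcev tx ty tz tH);
  (-4, Malcev tx tz ty tH);
  (20, Malcev tx tH ty tz);
  (12, Malcev tx tz tH ty);
  (-4, Malcev (tx ⋅ ty) tz tE tG);
  (-18, Malcev (tx ⋅ ty) tE tz tG);
  (8, Malcev (tx ⋅ ty) tH tz tH);
  (-2, Malcev (tx ⋅ ty) tG tz tE);
  (-4, Malcev (tx ⋅ ty) tE tG tz);
  (-8, Malcev tx (ty ⋅ tz) tE tG);
  (-28, Malcev tx ty (tE ⋅ tz) tG);
  (20, Malcev tx ty (tG ⋅ tz) tE);
  (4, Malcev tx ty (tH ⋅ tz) tH);
  (18, Malcev tx (tE ⋅ ty) tz tG);
  (42, Malcev tx (tG ⋅ ty) tz tE);
  (-30, Malcev tx (tH ⋅ ty) tz tH);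
  (64, Malcev (tE ⋅ tx) ty tz tG);
  (-6, Malcev (tG ⋅ tx) ty tz tE);
  (-29, Malcev (tH ⋅ tx) ty tz tH);
  (42, Malcev tx ty tE (tG ⋅ tz));
  (-14, Malcev tx ty tH (tH ⋅ tz));
  (-14, Malcev tx ty tG (tE ⋅ tz));
  (15, Malcev tx (tE ⋅ ty) tG tz);
  (-13, Malcev tx (tG ⋅ ty) tE tz);
  (-1, Malcev tx (tH ⋅ ty) tH tz);
  (45, Malcev (tE ⋅ tx) ty tG tz);
  (15, Malcev (tG ⋅ tx) ty tE tz);
  (-24, Malcev (tH ⋅ tx) ty tH tz);
  (-9, Malcev (tx ⋅ tz) tE ty tG);
  (3, Malcev (tx ⋅ tz) tH ty tH);
  (3, Malcev (tx ⋅ tz) tG ty tE);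
  (33, Malcev tx tz (tE ⋅ ty) tG);
  (29, Malcev tx tz (tG ⋅ ty) tE);
  (-31, Malcev tx tz (tH ⋅ ty) tH);
  (-39, Malcev tx (tE ⋅ tz) ty tG);
  (37, Malcev tx (tG ⋅ tz) ty tE);
  (1, Malcev tx (tH ⋅ tz) ty tH);
  (50, Malcev (tE ⋅ tx) tz ty tG);
  (-10, Malcev (tG ⋅ tx) tz ty tE);
  (-14, Malcev (tH ⋅ tx) tz ty tH);
  (-13, Malcev tx tE (ty ⋅ tz) tG);
  (-5, Malcev tx tH (ty ⋅ tz) tH);
  (15, Malcev tx tG (ty ⋅ tz) tE);
  (17, Malcev tx tE ty (tG ⋅ tz));
  (-3, Malcev tx tH ty (tH ⋅ tz));
  (-11, Malcev tx tG ty (tE ⋅ tz));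
  (7, Malcev tx tE (tG ⋅ ty) tz);
  (-1, Malcev tx tH (tH ⋅ ty) tz);
  (-5, Malcev tx tG (tE ⋅ ty) tz);
  (38, Malcev (tE ⋅ tx) tG ty tz);
  (-8, Malcev (tG ⋅ tx) tE ty tz);
  (-15, Malcev (tH ⋅ tx) tH ty tz);
  (17, Malcev tx tz tE (tG ⋅ ty));
  (-15, Malcev tx tz tH (tH ⋅ ty));
  (13, Malcev tx tz tG (tE ⋅ ty));
  (-8, Malcev tx (tE ⋅ tz) tG ty);
  (8, Malcev tx (tG ⋅ tz) tE ty);
  (59, Malcev (tE ⋅ tx) tz tG ty);
  (-1, Malcev (tG ⋅ tx) tz tE ty);
  (-29, Malcev (tH ⋅ tx) tz tH ty);
  (-8, Malcev tx tE tG (ty ⋅ tz));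
  (72, RMul (Nucleus tx tE tG) (ty ⋅ tz));
  (168, RMul (Nucleus ty tE tG) (tx ⋅ tz));
  (-80, RMul (Nucleus tz tE tG) (tx ⋅ ty));
  (24, RMul (Malcev tx ty tE tG) tz);
  (-20, RMul (Malcev tx ty tG tE) tz);
  (-3, RMul (Malcev tx tE ty tG) tz);
  (7, RMul (Malcev tx tH ty tH) tz);
  (-7, RMul (Malcev tx tG ty tE) tz);
  (4, RMul (Malcev tx tE tG ty) tz);
  (92, RMul (RMul (Nucleus tx tE tG) ty) tz);
  (20, RMul (RMul (Nucleus ty tE tG) tx) tz);
  (12, RMul (Malcev tx tz tE tG) ty);
  (-12, RMul (Malcev tx tz tG tE) ty);
  (14, RMul (Malcev tx tE tz tG) ty);
  (-18, RMul (Malcev tx tH tz tH) ty);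
  (22, RMul (Malcev tx tG tz tE) ty);
  (32, RMul (RMul (Nucleus tx tE tG) tz) ty);
  (12, RMul (RMul (Nucleus tz tE tG) tx) ty);
  (-20, RMul (Malcev ty tz tE tG) tx);
  (20, RMul (Malcev ty tz tG tE) tx);
  (-20, RMul (RMul (Nucleus ty tE tG) tz) tx);
  (-12, RMul (RMul (Nucleus tz tE tG) ty) tx);
  (28, Malcev (tx ⋅ ty) (tE ⋅ tz) tH tG);
  (28, Malcev (tx ⋅ ty) (tG ⋅ tz) tE tH);
  (-28, Malcev (tx ⋅ ty) (tH ⋅ tz) tE tG);
  (-18, Malcev (tE ⋅ (tx ⋅ ty)) tz tH tG);
  (2, Malcev (tG ⋅ (tx ⋅ ty)) tz tE tH);
  (8, Malcev (tH ⋅ (tx ⋅ ty)) tz tE tG);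
  (-5, Malcev (tx ⋅ (tE ⋅ ty)) tz tH tG);
  (-25, Malcev (tx ⋅ (tG ⋅ ty)) tz tE tH);
  (15, Malcev (tx ⋅ (tH ⋅ ty)) tz tE tG);
  (5, Malcev (ty ⋅ (tE ⋅ tx)) tz tH tG);
  (-5, Malcev (ty ⋅ (tG ⋅ tx)) tz tE tH);
  (18, Malcev (tx ⋅ ty) tE (tG ⋅ tz) tH);
  (-18, Malcev (tx ⋅ ty) tE (tH ⋅ tz) tG);
  (8, Malcev (tx ⋅ ty) tH (tE ⋅ tz) tG);
  (20, Malcev (tx ⋅ ty) tH (tG ⋅ tz) tE);
  (30, Malcev (tx ⋅ ty) tG (tE ⋅ tz) tH);
  (-30, Malcev (tx ⋅ ty) tG (tH ⋅ tz) tE);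
  (-18, Malcev (tE ⋅ (tx ⋅ ty)) tG tz tH);
  (2, Malcev (tG ⋅ (tx ⋅ ty)) tH tz tE);
  (8, Malcev (tH ⋅ (tx ⋅ ty)) tG tz tE);
  (-5, Malcev (tx ⋅ (tE ⋅ ty)) tG tz tH);
  (-25, Malcev (tx ⋅ (tG ⋅ ty)) tH tz tE);
  (15, Malcev (tx ⋅ (tH ⋅ ty)) tG tz tE);
  (5, Malcev (ty ⋅ (tE ⋅ tx)) tG tz tH);
  (-5, Malcev (ty ⋅ (tG ⋅ tx)) tH tz tE);
  (28, Malcev (tx ⋅ ty) tE tH (tG ⋅ tz));
  (-28, Malcev (tx ⋅ ty) tE tG (tH ⋅ tz));
  (28, Malcev (tx ⋅ ty) tH tG (tE ⋅ tz));
  (-18, Malcev (tE ⋅ (tx ⋅ ty)) tH tG tz);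
  (2, Malcev (tG ⋅ (tx ⋅ ty)) tE tH tz);
  (8, Malcev (tH ⋅ (tx ⋅ ty)) tE tG tz);
  (-5, Malcev (tx ⋅ (tE ⋅ ty)) tH tG tz);
  (-25, Malcev (tx ⋅ (tG ⋅ ty)) tE tH tz);
  (15, Malcev (tx ⋅ (tH ⋅ ty)) tE tG tz);
  (5, Malcev (ty ⋅ (tE ⋅ tx)) tH tG tz);
  (-5, Malcev (ty ⋅ (tG ⋅ tx)) tE tH tz);
  (-21, Malcev (tx ⋅ tz) (tE ⋅ ty) tH tG);
  (-21, Malcev (tx ⋅ tz) (tG ⋅ ty) tE tH);
  (21, Malcev (tx ⋅ tz) (tH ⋅ ty) tE tG);
  (-9, Malcev (tE ⋅ (tx ⋅ tz)) ty tH tG);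
  (3, Malcev (tG ⋅ (tx ⋅ tz)) ty tE tH);
  (3, Malcev (tH ⋅ (tx ⋅ tz)) ty tE tG);
  (25, Malcev (tx ⋅ (tE ⋅ tz)) ty tH tG);
  (5, Malcev (tx ⋅ (tG ⋅ tz)) ty tE tH);
  (-15, Malcev (tx ⋅ (tH ⋅ tz)) ty tE tG);
  (5, Malcev (tz ⋅ (tE ⋅ tx)) ty tH tG);
  (-25, Malcev (tz ⋅ (tG ⋅ tx)) ty tE tH);
  (10, Malcev (tz ⋅ (tH ⋅ tx)) ty tE tG);
  (15, Malcev tx (tE ⋅ (ty ⋅ tz)) tH tG);
  (-5, Malcev tx (tG ⋅ (ty ⋅ tz)) tE tH);
  (-5, Malcev tx (tH ⋅ (ty ⋅ tz)) tE tG);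
  (11, Malcev tx (ty ⋅ (tE ⋅ tz)) tH tG);
  (-17, Malcev tx (ty ⋅ (tG ⋅ tz)) tE tH);
  (3, Malcev tx (ty ⋅ (tH ⋅ tz)) tE tG);
  (-5, Malcev tx (tz ⋅ (tE ⋅ ty)) tH tG);
  (7, Malcev tx (tz ⋅ (tG ⋅ ty)) tE tH);
  (-1, Malcev tx (tz ⋅ (tH ⋅ ty)) tE tG);
  (-25, Malcev (tE ⋅ tx) (ty ⋅ tz) tH tG);
  (-35, Malcev (tG ⋅ tx) (ty ⋅ tz) tE tH);
  (30, Malcev (tH ⋅ tx) (ty ⋅ tz) tE tG);
  (-20, Malcev tx ty (tE ⋅ (tG ⋅ tz)) tH);
  (30, Malcev tx ty (tE ⋅ (tH ⋅ tz)) tG);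
  (20, Malcev tx ty (tG ⋅ (tE ⋅ tz)) tH);
  (-10, Malcev tx ty (tG ⋅ (tH ⋅ tz)) tE);
  (-30, Malcev tx ty (tH ⋅ (tE ⋅ tz)) tG);
  (10, Malcev tx ty (tH ⋅ (tG ⋅ tz)) tE);
  (5, Malcev tx (tE ⋅ ty) (tG ⋅ tz) tH);
  (-5, Malcev tx (tE ⋅ ty) (tH ⋅ tz) tG);
  (-5, Malcev tx (tG ⋅ ty) (tE ⋅ tz) tH);
  (5, Malcev tx (tG ⋅ ty) (tH ⋅ tz) tE);
  (5, Malcev tx (tH ⋅ ty) (tE ⋅ tz) tG);
  (-5, Malcev tx (tH ⋅ ty) (tG ⋅ tz) tE);
  (24, Malcev tx (tE ⋅ (tG ⋅ ty)) tz tH);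
  (-18, Malcev tx (tE ⋅ (tH ⋅ ty)) tz tG);
  (-24, Malcev tx (tG ⋅ (tE ⋅ ty)) tz tH);
  (30, Malcev tx (tG ⋅ (tH ⋅ ty)) tz tE);
  (18, Malcev tx (tH ⋅ (tE ⋅ ty)) tz tG);
  (-30, Malcev tx (tH ⋅ (tG ⋅ ty)) tz tE);
  (5, Malcev (tE ⋅ tx) ty (tG ⋅ tz) tH);
  (-5, Malcev (tE ⋅ tx) ty (tH ⋅ tz) tG);
  (-15, Malcev (tG ⋅ tx) ty (tE ⋅ tz) tH);
  (15, Malcev (tG ⋅ tx) ty (tH ⋅ tz) tE);
  (10, Malcev (tH ⋅ tx) ty (tE ⋅ tz) tG);
  (-10, Malcev (tH ⋅ tx) ty (tG ⋅ tz) tE);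
  (-15, Malcev (tE ⋅ tx) (tG ⋅ ty) tz tH);
  (15, Malcev (tE ⋅ tx) (tH ⋅ ty) tz tG);
  (25, Malcev (tG ⋅ tx) (tE ⋅ ty) tz tH);
  (-25, Malcev (tG ⋅ tx) (tH ⋅ ty) tz tE);
  (-20, Malcev (tH ⋅ tx) (tE ⋅ ty) tz tG);
  (20, Malcev (tH ⋅ tx) (tG ⋅ ty) tz tE);
  (23, Malcev (tE ⋅ (tG ⋅ tx)) ty tz tH);
  (-42, Malcev (tE ⋅ (tH ⋅ tx)) ty tz tG);
  (-13, Malcev (tG ⋅ (tE ⋅ tx)) ty tz tH);
  (-6, Malcev (tG ⋅ (tH ⋅ tx)) ty tz tE);
  (37, Malcev (tH ⋅ (tE ⋅ tx)) ty tz tG);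
  (1, Malcev (tH ⋅ (tG ⋅ tx)) ty tz tE);
  (-10, Malcev tx ty tE (tG ⋅ (tH ⋅ tz)));
  (10, Malcev tx ty tE (tH ⋅ (tG ⋅ tz)));
  (-20, Malcev tx ty tH (tE ⋅ (tG ⋅ tz)));
  (20, Malcev tx ty tH (tG ⋅ (tE ⋅ tz)));
  (30, Malcev tx ty tG (tE ⋅ (tH ⋅ tz)));
  (-30, Malcev tx ty tG (tH ⋅ (tE ⋅ tz)));
  (10, Malcev tx (tE ⋅ ty) tH (tG ⋅ tz));
  (-20, Malcev tx (tE ⋅ ty) tG (tH ⋅ tz));
  (20, Malcev tx (tG ⋅ ty) tE (tH ⋅ tz));
  (-30, Malcev tx (tG ⋅ ty) tH (tE ⋅ tz));
  (-10, Malcev tx (tH ⋅ ty) tE (tG ⋅ tz));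
  (30, Malcev tx (tH ⋅ ty) tG (tE ⋅ tz));
  (22, Malcev (tE ⋅ tx) ty tH (tG ⋅ tz));
  (-8, Malcev (tE ⋅ tx) ty tG (tH ⋅ tz));
  (18, Malcev (tG ⋅ tx) ty tE (tH ⋅ tz));
  (-4, Malcev (tG ⋅ tx) ty tH (tE ⋅ tz));
  (-27, Malcev (tH ⋅ tx) ty tE (tG ⋅ tz));
  (-1, Malcev (tH ⋅ tx) ty tG (tE ⋅ tz));
  (-3, Malcev (tE ⋅ tx) (tG ⋅ ty) tH tz);
  (9, Malcev (tE ⋅ tx) (tH ⋅ ty) tG tz);
  (35, Malcev (tG ⋅ tx) (tE ⋅ ty) tH tz);
  (-29, Malcev (tG ⋅ tx) (tH ⋅ ty) tE tz);
  (-25, Malcev (tH ⋅ tx) (tE ⋅ ty) tG tz);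
  (13, Malcev (tH ⋅ tx) (tG ⋅ ty) tE tz);
  (13, Malcev (tE ⋅ (tG ⋅ tx)) ty tH tz);
  (-25, Malcev (tE ⋅ (tH ⋅ tx)) ty tG tz);
  (7, Malcev (tG ⋅ (tE ⋅ tx)) ty tH tz);
  (-7, Malcev (tG ⋅ (tH ⋅ tx)) ty tE tz);
  (15, Malcev (tH ⋅ (tE ⋅ tx)) ty tG tz);
  (-3, Malcev (tH ⋅ (tG ⋅ tx)) ty tE tz);
  (9, Malcev (tx ⋅ tz) tE (tG ⋅ ty) tH);
  (-9, Malcev (tx ⋅ tz) tE (tH ⋅ ty) tG);
  (3, Malcev (tx ⋅ tz) tH (tE ⋅ ty) tG);
  (-24, Malcev (tx ⋅ tz) tH (tG ⋅ ty) tE);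
  (-18, Malcev (tx ⋅ tz) tG (tE ⋅ ty) tH);
  (18, Malcev (tx ⋅ tz) tG (tH ⋅ ty) tE);
  (-9, Malcev (tE ⋅ (tx ⋅ tz)) tG ty tH);
  (3, Malcev (tG ⋅ (tx ⋅ tz)) tH ty tE);
  (3, Malcev (tH ⋅ (tx ⋅ tz)) tG ty tE);
  (25, Malcev (tx ⋅ (tE ⋅ tz)) tG ty tH);
  (5, Malcev (tx ⋅ (tG ⋅ tz)) tH ty tE);
  (-15, Malcev (tx ⋅ (tH ⋅ tz)) tG ty tE);
  (5, Malcev (tz ⋅ (tE ⋅ tx)) tG ty tH);
  (-25, Malcev (tz ⋅ (tG ⋅ tx)) tH ty tE);
  (10, Malcev (tz ⋅ (tH ⋅ tx)) tG ty tE);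
  (24, Malcev tx tz (tE ⋅ (tG ⋅ ty)) tH);
  (-18, Malcev tx tz (tE ⋅ (tH ⋅ ty)) tG);
  (-24, Malcev tx tz (tG ⋅ (tE ⋅ ty)) tH);
  (30, Malcev tx tz (tG ⋅ (tH ⋅ ty)) tE);
  (18, Malcev tx tz (tH ⋅ (tE ⋅ ty)) tG);
  (-30, Malcev tx tz (tH ⋅ (tG ⋅ ty)) tE);
  (-5, Malcev tx (tE ⋅ tz) (tG ⋅ ty) tH);
  (5, Malcev tx (tE ⋅ tz) (tH ⋅ ty) tG);
  (5, Malcev tx (tG ⋅ tz) (tE ⋅ ty) tH);
  (-5, Malcev tx (tG ⋅ tz) (tH ⋅ ty) tE);
  (-5, Malcev tx (tH ⋅ tz) (tE ⋅ ty) tG);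
  (5, Malcev tx (tH ⋅ tz) (tG ⋅ ty) tE);
  (-20, Malcev tx (tE ⋅ (tG ⋅ tz)) ty tH);
  (30, Malcev tx (tE ⋅ (tH ⋅ tz)) ty tG);
  (20, Malcev tx (tG ⋅ (tE ⋅ tz)) ty tH);
  (-10, Malcev tx (tG ⋅ (tH ⋅ tz)) ty tE);
  (-30, Malcev tx (tH ⋅ (tE ⋅ tz)) ty tG);
  (10, Malcev tx (tH ⋅ (tG ⋅ tz)) ty tE);
  (-8, Malcev (tE ⋅ tx) tz (tG ⋅ ty) tH);
  (14, Malcev (tE ⋅ tx) tz (tH ⋅ ty) tG);
  (10, Malcev (tG ⋅ tx) tz (tE ⋅ ty) tH);
  (-4, Malcev (tG ⋅ tx) tz (tH ⋅ ty) tE);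
  (-15, Malcev (tH ⋅ tx) tz (tE ⋅ ty) tG);
  (3, Malcev (tH ⋅ tx) tz (tG ⋅ ty) tE);
  (22, Malcev (tE ⋅ tx) (tG ⋅ tz) ty tH);
  (-8, Malcev (tE ⋅ tx) (tH ⋅ tz) ty tG);
  (-4, Malcev (tG ⋅ tx) (tE ⋅ tz) ty tH);
  (18, Malcev (tG ⋅ tx) (tH ⋅ tz) ty tE);
  (-1, Malcev (tH ⋅ tx) (tE ⋅ tz) ty tG);
  (-27, Malcev (tH ⋅ tx) (tG ⋅ tz) ty tE);
  (13, Malcev (tE ⋅ (tG ⋅ tx)) tz ty tH);
  (-25, Malcev (tE ⋅ (tH ⋅ tx)) tz ty tG);
  (7, Malcev (tG ⋅ (tE ⋅ tx)) tz ty tH);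
  (-7, Malcev (tG ⋅ (tH ⋅ tx)) tz ty tE);
  (15, Malcev (tH ⋅ (tE ⋅ tx)) tz ty tG);
  (-3, Malcev (tH ⋅ (tG ⋅ tx)) tz ty tE);
  (-5, Malcev tx tE (tG ⋅ (ty ⋅ tz)) tH);
  (-5, Malcev tx tE (tH ⋅ (ty ⋅ tz)) tG);
  (-17, Malcev tx tE (ty ⋅ (tG ⋅ tz)) tH);
  (3, Malcev tx tE (ty ⋅ (tH ⋅ tz)) tG);
  (7, Malcev tx tE (tz ⋅ (tG ⋅ ty)) tH);
  (-1, Malcev tx tE (tz ⋅ (tH ⋅ ty)) tG);
  (15, Malcev tx tH (tE ⋅ (ty ⋅ tz)) tG);
  (11, Malcev tx tH (ty ⋅ (tE ⋅ tz)) tG);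
  (-5, Malcev tx tH (tz ⋅ (tE ⋅ ty)) tG);
  (-30, Malcev (tE ⋅ tx) tH (ty ⋅ tz) tG);
  (-5, Malcev (tE ⋅ tx) tG (ty ⋅ tz) tH);
  (-30, Malcev (tG ⋅ tx) tE (ty ⋅ tz) tH);
  (-15, Malcev (tG ⋅ tx) tH (ty ⋅ tz) tE);
  (35, Malcev (tH ⋅ tx) tE (ty ⋅ tz) tG);
  (15, Malcev (tH ⋅ tx) tG (ty ⋅ tz) tE);
  (17, Malcev (tE ⋅ tx) tH ty (tG ⋅ tz));
  (-3, Malcev (tE ⋅ tx) tG ty (tH ⋅ tz));
  (3, Malcev (tG ⋅ tx) tE ty (tH ⋅ tz));
  (11, Malcev (tG ⋅ tx) tH ty (tE ⋅ tz));
  (-17, Malcev (tH ⋅ tx) tE ty (tG ⋅ tz));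
  (-11, Malcev (tH ⋅ tx) tG ty (tE ⋅ tz));
  (7, Malcev (tE ⋅ tx) tH (tG ⋅ ty) tz);
  (-1, Malcev (tE ⋅ tx) tG (tH ⋅ ty) tz);
  (1, Malcev (tG ⋅ tx) tE (tH ⋅ ty) tz);
  (5, Malcev (tG ⋅ tx) tH (tE ⋅ ty) tz);
  (-7, Malcev (tH ⋅ tx) tE (tG ⋅ ty) tz);
  (-5, Malcev (tH ⋅ tx) tG (tE ⋅ ty) tz);
  (30, Malcev (tE ⋅ (tG ⋅ tx)) tH ty tz);
  (-35, Malcev (tE ⋅ (tH ⋅ tx)) tG ty tz);
  (-20, Malcev (tG ⋅ (tE ⋅ tx)) tH ty tz);
  (15, Malcev (tG ⋅ (tH ⋅ tx)) tE ty tz);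
  (30, Malcev (tH ⋅ (tE ⋅ tx)) tG ty tz);
  (-20, Malcev (tH ⋅ (tG ⋅ tx)) tE ty tz);
  (-21, Malcev (tx ⋅ tz) tE tH (tG ⋅ ty));
  (21, Malcev (tx ⋅ tz) tE tG (tH ⋅ ty));
  (-21, Malcev (tx ⋅ tz) tH tG (tE ⋅ ty));
  (-9, Malcev (tE ⋅ (tx ⋅ tz)) tH tG ty);
  (3, Malcev (tG ⋅ (tx ⋅ tz)) tE tH ty);
  (3, Malcev (tH ⋅ (tx ⋅ tz)) tE tG ty);
  (25, Malcev (tx ⋅ (tE ⋅ tz)) tH tG ty);
  (5, Malcev (tx ⋅ (tG ⋅ tz)) tE tH ty);
  (-15, Malcev (tx ⋅ (tH ⋅ tz)) tE tG ty);
  (5, Malcev (tz ⋅ (tE ⋅ tx)) tH tG ty);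
  (-25, Malcev (tz ⋅ (tG ⋅ tx)) tE tH ty);
  (10, Malcev (tz ⋅ (tH ⋅ tx)) tE tG ty);
  (30, Malcev tx tz tE (tG ⋅ (tH ⋅ ty)));
  (-30, Malcev tx tz tE (tH ⋅ (tG ⋅ ty)));
  (24, Malcev tx tz tH (tE ⋅ (tG ⋅ ty)));
  (-24, Malcev tx tz tH (tG ⋅ (tE ⋅ ty)));
  (-18, Malcev tx tz tG (tE ⋅ (tH ⋅ ty)));
  (18, Malcev tx tz tG (tH ⋅ (tE ⋅ ty)));
  (-30, Malcev tx (tE ⋅ tz) tH (tG ⋅ ty));
  (20, Malcev tx (tE ⋅ tz) tG (tH ⋅ ty));
  (-20, Malcev tx (tG ⋅ tz) tE (tH ⋅ ty));
  (10, Malcev tx (tG ⋅ tz) tH (tE ⋅ ty));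
  (30, Malcev tx (tH ⋅ tz) tE (tG ⋅ ty));
  (-10, Malcev tx (tH ⋅ tz) tG (tE ⋅ ty));
  (-15, Malcev (tE ⋅ tx) tz tH (tG ⋅ ty));
  (15, Malcev (tE ⋅ tx) tz tG (tH ⋅ ty));
  (-25, Malcev (tG ⋅ tx) tz tE (tH ⋅ ty));
  (25, Malcev (tG ⋅ tx) tz tH (tE ⋅ ty));
  (20, Malcev (tH ⋅ tx) tz tE (tG ⋅ ty));
  (-20, Malcev (tH ⋅ tx) tz tG (tE ⋅ ty));
  (10, Malcev (tE ⋅ tx) (tG ⋅ tz) tH ty);
  (-10, Malcev (tE ⋅ tx) (tH ⋅ tz) tG ty);
  (-10, Malcev (tG ⋅ tx) (tE ⋅ tz) tH ty);
  (10, Malcev (tG ⋅ tx) (tH ⋅ tz) tE ty);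
  (10, Malcev (tH ⋅ tx) (tE ⋅ tz) tG ty);
  (-10, Malcev (tH ⋅ tx) (tG ⋅ tz) tE ty);
  (23, Malcev (tE ⋅ (tG ⋅ tx)) tz tH ty);
  (-42, Malcev (tE ⋅ (tH ⋅ tx)) tz tG ty);
  (-13, Malcev (tG ⋅ (tE ⋅ tx)) tz tH ty);
  (-6, Malcev (tG ⋅ (tH ⋅ tx)) tz tE ty);
  (37, Malcev (tH ⋅ (tE ⋅ tx)) tz tG ty);
  (1, Malcev (tH ⋅ (tG ⋅ tx)) tz tE ty);
  (-5, Malcev tx tE tH (tG ⋅ (ty ⋅ tz)));
  (-17, Malcev tx tE tH (ty ⋅ (tG ⋅ tz)));
  (7, Malcev tx tE tH (tz ⋅ (tG ⋅ ty)));
  (-5, Malcev tx tE tG (tH ⋅ (ty ⋅ tz)));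
  (3, Malcev tx tE tG (ty ⋅ (tH ⋅ tz)));
  (-1, Malcev tx tE tG (tz ⋅ (tH ⋅ ty)));
  (15, Malcev tx tH tG (tE ⋅ (ty ⋅ tz)));
  (11, Malcev tx tH tG (ty ⋅ (tE ⋅ tz)));
  (-5, Malcev tx tH tG (tz ⋅ (tE ⋅ ty)));
  (-25, Malcev (tE ⋅ tx) tH tG (ty ⋅ tz));
  (-35, Malcev (tG ⋅ tx) tE tH (ty ⋅ tz));
  (30, Malcev (tH ⋅ tx) tE tG (ty ⋅ tz));
  (42, RMul (Nucleus tx tE tH) (tG ⋅ (ty ⋅ tz)));
  (-42, RMul (Nucleus tx tE tH) (ty ⋅ (tG ⋅ tz)));
  (10, RMul (Nucleus tx tE tH) (tz ⋅ (tG ⋅ ty)));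
  (-50, RMul (Nucleus tx tE tG) (tH ⋅ (ty ⋅ tz)));
  (18, RMul (Nucleus tx tE tG) (ty ⋅ (tH ⋅ tz)));
  (-22, RMul (Nucleus tx tE tG) (tz ⋅ (tH ⋅ ty)));
  (46, RMul (Nucleus tx tH tG) (tE ⋅ (ty ⋅ tz)));
  (6, RMul (Nucleus tx tH tG) (ty ⋅ (tE ⋅ tz)));
  (22, RMul (Nucleus tx tH tG) (tz ⋅ (tE ⋅ ty)));
  (30, RMul (Malcev tx tE tH tG) (ty ⋅ tz));
  (50, RMul (Malcev tx tE tG tH) (ty ⋅ tz));
  (-26, RMul (Malcev tx tH tE tG) (ty ⋅ tz));
  (-36, RMul (Malcev tx tH tG tE) (ty ⋅ tz));
  (108, RMul (RMul (Nucleus tx tE tH) tG) (ty ⋅ tz));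
  (42, RMul (Nucleus ty tE tH) (tG ⋅ (tx ⋅ tz)));
  (-18, RMul (Nucleus ty tE tH) (tx ⋅ (tG ⋅ tz)));
  (18, RMul (Nucleus ty tE tH) (tz ⋅ (tG ⋅ tx)));
  (-42, RMul (Nucleus ty tE tG) (tH ⋅ (tx ⋅ tz)));
  (14, RMul (Nucleus ty tE tG) (tx ⋅ (tH ⋅ tz)));
  (-34, RMul (Nucleus ty tE tG) (tz ⋅ (tH ⋅ tx)));
  (42, RMul (Nucleus ty tH tG) (tE ⋅ (tx ⋅ tz)));
  (-10, RMul (Nucleus ty tH tG) (tx ⋅ (tE ⋅ tz)));
  (50, RMul (Nucleus ty tH tG) (tz ⋅ (tE ⋅ tx)));
  (54, RMul (Malcev ty tE tH tG) (tx ⋅ tz));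
  (42, RMul (Malcev ty tE tG tH) (tx ⋅ tz));
  (-54, RMul (Malcev ty tH tE tG) (tx ⋅ tz));
  (-48, RMul (Malcev ty tH tG tE) (tx ⋅ tz));
  (144, RMul (RMul (Nucleus ty tE tH) tG) (tx ⋅ tz));
  (-56, RMul (Nucleus tz tE tH) (tG ⋅ (tx ⋅ ty)));
  (10, RMul (Nucleus tz tE tH) (tx ⋅ (tG ⋅ ty)));
  (-50, RMul (Nucleus tz tE tH) (ty ⋅ (tG ⋅ tx)));
  (56, RMul (Nucleus tz tE tG) (tH ⋅ (tx ⋅ ty)));
  (-10, RMul (Nucleus tz tE tG) (tx ⋅ (tH ⋅ ty)));
  (30, RMul (Nucleus tz tE tG) (ty ⋅ (tH ⋅ tx)));
  (-56, RMul (Nucleus tz tH tG) (tE ⋅ (tx ⋅ ty)));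
  (10, RMul (Nucleus tz tH tG) (tx ⋅ (tE ⋅ ty)));
  (-10, RMul (Nucleus tz tH tG) (ty ⋅ (tE ⋅ tx)));
  (-30, RMul (Malcev tz tE tH tG) (tx ⋅ ty));
  (-50, RMul (Malcev tz tE tG tH) (tx ⋅ ty));
  (30, RMul (Malcev tz tH tE tG) (tx ⋅ ty));
  (40, RMul (Malcev tz tH tG tE) (tx ⋅ ty));
  (-120, RMul (RMul (Nucleus tz tE tH) tG) (tx ⋅ ty));
  (22, RMul (Malcev tx ty tE tH) (tG ⋅ tz));
  (-8, RMul (Malcev tx ty tE tG) (tH ⋅ tz));
  (26, RMul (Malcev tx ty tH tE) (tG ⋅ tz));
  (-6, RMul (Malcev tx ty tH tG) (tE ⋅ tz));
  (-16, RMul (Malcev tx ty tG tE) (tH ⋅ tz));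
  (6, RMul (Malcev tx ty tG tH) (tE ⋅ tz));
  (43, RMul (Malcev tx tE ty tH) (tG ⋅ tz));
  (-19, RMul (Malcev tx tE ty tG) (tH ⋅ tz));
  (-5, RMul (Malcev tx tH ty tE) (tG ⋅ tz));
  (5, RMul (Malcev tx tH ty tG) (tE ⋅ tz));
  (15, RMul (Malcev tx tG ty tE) (tH ⋅ tz));
  (-15, RMul (Malcev tx tG ty tH) (tE ⋅ tz));
  (48, RMul (Malcev tx tE tH ty) (tG ⋅ tz));
  (-24, RMul (Malcev tx tE tG ty) (tH ⋅ tz));
  (26, RMul (RMul (Nucleus tx tE tH) ty) (tG ⋅ tz));
  (-14, RMul (RMul (Nucleus tx tE tG) ty) (tH ⋅ tz));
  (14, RMul (RMul (Nucleus tx tH tG) ty) (tE ⋅ tz));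
  (-34, RMul (RMul (Nucleus ty tE tH) tx) (tG ⋅ tz));
  (30, RMul (RMul (Nucleus ty tE tG) tx) (tH ⋅ tz));
  (-26, RMul (RMul (Nucleus ty tH tG) tx) (tE ⋅ tz));
  (13, RMul (Malcev tx (tE ⋅ ty) tH tG) tz);
  (5, RMul (Malcev tx (tG ⋅ ty) tE tH) tz);
  (-9, RMul (Malcev tx (tH ⋅ ty) tE tG) tz);
  (-45, RMul (Malcev (tE ⋅ tx) ty tH tG) tz);
  (-45, RMul (Malcev (tG ⋅ tx) ty tE tH) tz);
  (45, RMul (Malcev (tH ⋅ tx) ty tE tG) tz);
  (5, RMul (Malcev tx tE (tG ⋅ ty) tH) tz);
  (-9, RMul (Malcev tx tE (tH ⋅ ty) tG) tz);
  (13, RMul (Malcev tx tH (tE ⋅ ty) tG) tz);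
  (-37, RMul (Malcev (tE ⋅ tx) tH ty tG) tz);
  (-18, RMul (Malcev (tE ⋅ tx) tG ty tH) tz);
  (-7, RMul (Malcev (tG ⋅ tx) tE ty tH) tz);
  (-48, RMul (Malcev (tG ⋅ tx) tH ty tE) tz);
  (27, RMul (Malcev (tH ⋅ tx) tE ty tG) tz);
  (38, RMul (Malcev (tH ⋅ tx) tG ty tE) tz);
  (5, RMul (Malcev tx tE tH (tG ⋅ ty)) tz);
  (-9, RMul (Malcev tx tE tG (tH ⋅ ty)) tz);
  (13, RMul (Malcev tx tH tG (tE ⋅ ty)) tz);
  (-45, RMul (Malcev (tE ⋅ tx) tH tG ty) tz);
  (-45, RMul (Malcev (tG ⋅ tx) tE tH ty) tz);
  (45, RMul (Malcev (tH ⋅ tx) tE tG ty) tz);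
  (6, RMul (RMul (Nucleus tx tE tH) (tG ⋅ ty)) tz);
  (-18, RMul (RMul (Nucleus tx tE tG) (tH ⋅ ty)) tz);
  (42, RMul (RMul (Nucleus tx tH tG) (tE ⋅ ty)) tz);
  (4, RMul (RMul (Malcev tx tE tH tG) ty) tz);
  (44, RMul (RMul (Malcev tx tE tG tH) ty) tz);
  (-28, RMul (RMul (Malcev tx tH tE tG) ty) tz);
  (-48, RMul (RMul (Malcev tx tH tG tE) ty) tz);
  (72, RMul (RMul (RMul (Nucleus tx tE tH) tG) ty) tz);
  (-54, RMul (RMul (Nucleus ty tE tH) (tG ⋅ tx)) tz);
  (50, RMul (RMul (Nucleus ty tE tG) (tH ⋅ tx)) tz);
  (-46, RMul (RMul (Nucleus ty tH tG) (tE ⋅ tx)) tz);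
  (52, RMul (RMul (RMul (Nucleus tx tE tH) ty) tG) tz);
  (-20, RMul (RMul (RMul (Nucleus tx tE tG) ty) tH) tz);
  (-12, RMul (Malcev tx tz tE tH) (tG ⋅ ty));
  (6, RMul (Malcev tx tz tE tG) (tH ⋅ ty));
  (12, RMul (Malcev tx tz tH tE) (tG ⋅ ty));
  (-6, RMul (Malcev tx tz tG tE) (tH ⋅ ty));
  (-15, RMul (Malcev tx tE tz tH) (tG ⋅ ty));
  (15, RMul (Malcev tx tE tz tG) (tH ⋅ ty));
  (5, RMul (Malcev tx tH tz tE) (tG ⋅ ty));
  (-5, RMul (Malcev tx tH tz tG) (tE ⋅ ty));
  (5, RMul (Malcev tx tG tz tE) (tH ⋅ ty));
  (-5, RMul (Malcev tx tG tz tH) (tE ⋅ ty));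
  (24, RMul (RMul (Nucleus tx tE tH) tz) (tG ⋅ ty));
  (-4, RMul (RMul (Nucleus tx tE tG) tz) (tH ⋅ ty));
  (-16, RMul (RMul (Nucleus tx tH tG) tz) (tE ⋅ ty));
  (8, RMul (RMul (Nucleus tz tE tH) tx) (tG ⋅ ty));
  (-4, RMul (RMul (Nucleus tz tE tG) tx) (tH ⋅ ty));
  (7, RMul (Malcev (tE ⋅ tx) tH tz tG) ty);
  (7, RMul (Malcev (tE ⋅ tx) tG tz tH) ty);
  (-7, RMul (Malcev (tG ⋅ tx) tE tz tH) ty);
  (21, RMul (Malcev (tG ⋅ tx) tH tz tE) ty);
  (-7, RMul (Malcev (tH ⋅ tx) tE tz tG) ty);
  (-21, RMul (Malcev (tH ⋅ tx) tG tz tE) ty);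
  (44, RMul (RMul (Nucleus tx tE tH) (tG ⋅ tz)) ty);
  (-28, RMul (RMul (Nucleus tx tE tG) (tH ⋅ tz)) ty);
  (8, RMul (RMul (Malcev tx tE tH tG) tz) ty);
  (-4, RMul (RMul (Malcev tx tH tE tG) tz) ty);
  (48, RMul (RMul (Nucleus tz tE tH) (tG ⋅ tx)) ty);
  (-24, RMul (RMul (Nucleus tz tE tG) (tH ⋅ tx)) ty);
  (20, RMul (Malcev ty tz tE tH) (tG ⋅ tx));
  (-10, RMul (Malcev ty tz tE tG) (tH ⋅ tx));
  (-20, RMul (Malcev ty tz tH tE) (tG ⋅ tx));
  (10, RMul (Malcev ty tz tG tE) (tH ⋅ tx));
  (-12, RMul (RMul (Nucleus ty tE tH) tz) (tG ⋅ tx));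
  (-4, RMul (RMul (Nucleus ty tE tG) tz) (tH ⋅ tx));
  (20, RMul (RMul (Nucleus ty tH tG) tz) (tE ⋅ tx));
  (8, RMul (RMul (Nucleus ty tE tH) (tG ⋅ tz)) tx);
  (-4, RMul (RMul (Nucleus ty tE tG) (tH ⋅ tz)) tx)].

Definition certificate_G : seq (int * relator) := [::
  (-12, Malcev tx ty tz tG);
  (-4, Malcev tx tz ty tG);
  (20, Malcev tx tG ty tz);
  (12, Malcev tx tz tG ty);
  (-4, Malcev (tx ⋅ ty) tz tH tG);
  (-10, Malcev (tx ⋅ ty) tH tz tG);
  (6, Malcev (tx ⋅ ty) tG tz tH);
  (-4, Malcev (tx ⋅ ty) tH tG tz);
  (-8, Malcev tx (ty ⋅ tz) tH tG);
  (24, Malcev tx ty (tG ⋅ tz) tH);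
  (-24, Malcev tx ty (tH ⋅ tz) tG);
  (12, Malcev tx (tG ⋅ ty) tz tH);
  (-12, Malcev tx (tH ⋅ ty) tz tG);
  (-35, Malcev (tG ⋅ tx) ty tz tH);
  (35, Malcev (tH ⋅ tx) ty tz tG);
  (28, Malcev tx ty tH (tG ⋅ tz));
  (-28, Malcev tx ty tG (tH ⋅ tz));
  (-14, Malcev tx (tG ⋅ ty) tH tz);
  (14, Malcev tx (tH ⋅ ty) tG tz);
  (-9, Malcev (tG ⋅ tx) ty tH tz);
  (13, Malcev (tH ⋅ tx) ty tG tz);
  (-6, Malcev (tx ⋅ tz) tH ty tG);
  (6, Malcev (tx ⋅ tz) tG ty tH);
  (-2, Malcev tx tz (tG ⋅ ty) tH);
  (2, Malcev tx tz (tH ⋅ ty) tG);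
  (38, Malcev tx (tG ⋅ tz) ty tH);
  (-38, Malcev tx (tH ⋅ tz) ty tG);
  (-24, Malcev (tG ⋅ tx) tz ty tH);
  (28, Malcev (tH ⋅ tx) tz ty tG);
  (-18, Malcev tx tH (ty ⋅ tz) tG);
  (10, Malcev tx tG (ty ⋅ tz) tH);
  (14, Malcev tx tH ty (tG ⋅ tz));
  (-14, Malcev tx tG ty (tH ⋅ tz));
  (6, Malcev tx tH (tG ⋅ ty) tz);
  (-6, Malcev tx tG (tH ⋅ ty) tz);
  (-23, Malcev (tG ⋅ tx) tH ty tz);
  (23, Malcev (tH ⋅ tx) tG ty tz);
  (2, Malcev tx tz tH (tG ⋅ ty));
  (-2, Malcev tx tz tG (tH ⋅ ty));
  (8, Malcev tx (tG ⋅ tz) tH ty);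
  (-8, Malcev tx (tH ⋅ tz) tG ty);
  (-30, Malcev (tG ⋅ tx) tz tH ty);
  (30, Malcev (tH ⋅ tx) tz tG ty);
  (-8, Malcev tx tH tG (ty ⋅ tz));
  (-44, RMul (Nucleus tx tH tG) (ty ⋅ tz));
  (24, RMul (Nucleus ty tH tG) (tx ⋅ tz));
  (40, RMul (Nucleus tz tH tG) (tx ⋅ ty));
  (24, RMul (Malcev tx ty tH tG) tz);
  (-20, RMul (Malcev tx ty tG tH) tz);
  (4, RMul (Malcev tx tH ty tG) tz);
  (4, RMul (Malcev tx tH tG ty) tz);
  (20, RMul (RMul (Nucleus tx tH tG) ty) tz);
  (20, RMul (RMul (Nucleus ty tH tG) tx) tz);
  (12, RMul (Malcev tx tz tH tG) ty);
  (-12, RMul (Malcev tx tz tG tH) ty);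
  (-4, RMul (Malcev tx tH tz tG) ty);
  (4, RMul (Malcev tx tG tz tH) ty);
  (24, RMul (RMul (Nucleus tx tH tG) tz) ty);
  (12, RMul (RMul (Nucleus tz tH tG) tx) ty);
  (-20, RMul (Malcev ty tz tH tG) tx);
  (20, RMul (Malcev ty tz tG tH) tx);
  (-20, RMul (RMul (Nucleus ty tH tG) tz) tx);
  (-12, RMul (RMul (Nucleus tz tH tG) ty) tx);
  (10, Malcev (tG ⋅ (tx ⋅ ty)) tz tE tG);
  (-10, Malcev (tH ⋅ (tx ⋅ ty)) tz tH tG);
  (-10, Malcev (tx ⋅ (tG ⋅ ty)) tz tE tG);
  (10, Malcev (tx ⋅ (tH ⋅ ty)) tz tH tG);
  (-5, Malcev (ty ⋅ (tG ⋅ tx)) tz tE tG);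
  (5, Malcev (ty ⋅ (tH ⋅ tx)) tz tH tG);
  (10, Malcev (tx ⋅ ty) tH (tG ⋅ tz) tH);
  (-10, Malcev (tx ⋅ ty) tH (tH ⋅ tz) tG);
  (10, Malcev (tx ⋅ ty) tG (tE ⋅ tz) tG);
  (-10, Malcev (tx ⋅ ty) tG (tG ⋅ tz) tE);
  (10, Malcev (tG ⋅ (tx ⋅ ty)) tG tz tE);
  (-10, Malcev (tH ⋅ (tx ⋅ ty)) tG tz tH);
  (-10, Malcev (tx ⋅ (tG ⋅ ty)) tG tz tE);
  (10, Malcev (tx ⋅ (tH ⋅ ty)) tG tz tH);
  (-5, Malcev (ty ⋅ (tG ⋅ tx)) tG tz tE);
  (5, Malcev (ty ⋅ (tH ⋅ tx)) tG tz tH);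
  (10, Malcev (tG ⋅ (tx ⋅ ty)) tE tG tz);
  (-10, Malcev (tH ⋅ (tx ⋅ ty)) tH tG tz);
  (-10, Malcev (tx ⋅ (tG ⋅ ty)) tE tG tz);
  (10, Malcev (tx ⋅ (tH ⋅ ty)) tH tG tz);
  (-5, Malcev (ty ⋅ (tG ⋅ tx)) tE tG tz);
  (5, Malcev (ty ⋅ (tH ⋅ tx)) tH tG tz);
  (6, Malcev (tG ⋅ (tx ⋅ tz)) ty tE tG);
  (-6, Malcev (tH ⋅ (tx ⋅ tz)) ty tH tG);
  (-10, Malcev (tx ⋅ (tG ⋅ tz)) ty tE tG);
  (10, Malcev (tx ⋅ (tH ⋅ tz)) ty tH tG);
  (-15, Malcev (tz ⋅ (tG ⋅ tx)) ty tE tG);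
  (15, Malcev (tz ⋅ (tH ⋅ tx)) ty tH tG);
  (-10, Malcev tx (tG ⋅ (ty ⋅ tz)) tE tG);
  (10, Malcev tx (tH ⋅ (ty ⋅ tz)) tH tG);
  (-14, Malcev tx (ty ⋅ (tG ⋅ tz)) tE tG);
  (14, Malcev tx (ty ⋅ (tH ⋅ tz)) tH tG);
  (6, Malcev tx (tz ⋅ (tG ⋅ ty)) tE tG);
  (-6, Malcev tx (tz ⋅ (tH ⋅ ty)) tH tG);
  (-5, Malcev (tG ⋅ tx) (ty ⋅ tz) tE tG);
  (5, Malcev (tH ⋅ tx) (ty ⋅ tz) tH tG);
  (10, Malcev tx ty (tE ⋅ (tG ⋅ tz)) tG);
  (-10, Malcev tx ty (tG ⋅ (tE ⋅ tz)) tG);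
  (10, Malcev tx ty (tG ⋅ (tH ⋅ tz)) tH);
  (-10, Malcev tx ty (tH ⋅ (tG ⋅ tz)) tH);
  (6, Malcev tx (tE ⋅ (tG ⋅ ty)) tz tG);
  (-6, Malcev tx (tG ⋅ (tE ⋅ ty)) tz tG);
  (6, Malcev tx (tG ⋅ (tH ⋅ ty)) tz tH);
  (-6, Malcev tx (tH ⋅ (tG ⋅ ty)) tz tH);
  (-5, Malcev (tG ⋅ tx) ty (tE ⋅ tz) tG);
  (5, Malcev (tG ⋅ tx) ty (tG ⋅ tz) tE);
  (-5, Malcev (tH ⋅ tx) ty (tG ⋅ tz) tH);
  (5, Malcev (tH ⋅ tx) ty (tH ⋅ tz) tG);
  (5, Malcev (tG ⋅ tx) (tE ⋅ ty) tz tG);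
  (-5, Malcev (tG ⋅ tx) (tG ⋅ ty) tz tE);
  (5, Malcev (tH ⋅ tx) (tG ⋅ ty) tz tH);
  (-5, Malcev (tH ⋅ tx) (tH ⋅ ty) tz tG);
  (-19, Malcev (tE ⋅ (tG ⋅ tx)) ty tz tG);
  (24, Malcev (tG ⋅ (tE ⋅ tx)) ty tz tG);
  (-5, Malcev (tG ⋅ (tG ⋅ tx)) ty tz tE);
  (-19, Malcev (tG ⋅ (tH ⋅ tx)) ty tz tH);
  (24, Malcev (tH ⋅ (tG ⋅ tx)) ty tz tH);
  (-5, Malcev (tH ⋅ (tH ⋅ tx)) ty tz tG);
  (10, Malcev tx ty tH (tG ⋅ (tH ⋅ tz)));
  (-10, Malcev tx ty tH (tH ⋅ (tG ⋅ tz)));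
  (10, Malcev tx ty tG (tE ⋅ (tG ⋅ tz)));
  (-10, Malcev tx ty tG (tG ⋅ (tE ⋅ tz)));
  (-10, Malcev tx (tE ⋅ ty) tG (tG ⋅ tz));
  (10, Malcev tx (tG ⋅ ty) tE (tG ⋅ tz));
  (-10, Malcev tx (tG ⋅ ty) tH (tH ⋅ tz));
  (10, Malcev tx (tH ⋅ ty) tG (tH ⋅ tz));
  (14, Malcev (tE ⋅ tx) ty tG (tG ⋅ tz));
  (-9, Malcev (tG ⋅ tx) ty tE (tG ⋅ tz));
  (14, Malcev (tG ⋅ tx) ty tH (tH ⋅ tz));
  (-5, Malcev (tG ⋅ tx) ty tG (tE ⋅ tz));
  (-5, Malcev (tH ⋅ tx) ty tH (tG ⋅ tz));
  (-9, Malcev (tH ⋅ tx) ty tG (tH ⋅ tz));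
  (6, Malcev (tE ⋅ tx) (tG ⋅ ty) tG tz);
  (10, Malcev (tG ⋅ tx) (tE ⋅ ty) tG tz);
  (-16, Malcev (tG ⋅ tx) (tG ⋅ ty) tE tz);
  (6, Malcev (tG ⋅ tx) (tH ⋅ ty) tH tz);
  (10, Malcev (tH ⋅ tx) (tG ⋅ ty) tH tz);
  (-16, Malcev (tH ⋅ tx) (tH ⋅ ty) tG tz);
  (-4, Malcev (tE ⋅ (tG ⋅ tx)) ty tG tz);
  (14, Malcev (tG ⋅ (tE ⋅ tx)) ty tG tz);
  (-10, Malcev (tG ⋅ (tG ⋅ tx)) ty tE tz);
  (10, Malcev (tH ⋅ (tG ⋅ tx)) ty tH tz);
  (-10, Malcev (tH ⋅ (tH ⋅ tx)) ty tG tz);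
  (6, Malcev (tx ⋅ tz) tH (tG ⋅ ty) tH);
  (-6, Malcev (tx ⋅ tz) tH (tH ⋅ ty) tG);
  (6, Malcev (tx ⋅ tz) tG (tE ⋅ ty) tG);
  (-6, Malcev (tx ⋅ tz) tG (tG ⋅ ty) tE);
  (6, Malcev (tG ⋅ (tx ⋅ tz)) tG ty tE);
  (-6, Malcev (tH ⋅ (tx ⋅ tz)) tG ty tH);
  (-10, Malcev (tx ⋅ (tG ⋅ tz)) tG ty tE);
  (10, Malcev (tx ⋅ (tH ⋅ tz)) tG ty tH);
  (-15, Malcev (tz ⋅ (tG ⋅ tx)) tG ty tE);
  (15, Malcev (tz ⋅ (tH ⋅ tx)) tG ty tH);
  (6, Malcev tx tz (tE ⋅ (tG ⋅ ty)) tG);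
  (-6, Malcev tx tz (tG ⋅ (tE ⋅ ty)) tG);
  (6, Malcev tx tz (tG ⋅ (tH ⋅ ty)) tH);
  (-6, Malcev tx tz (tH ⋅ (tG ⋅ ty)) tH);
  (10, Malcev tx (tE ⋅ (tG ⋅ tz)) ty tG);
  (-10, Malcev tx (tG ⋅ (tE ⋅ tz)) ty tG);
  (10, Malcev tx (tG ⋅ (tH ⋅ tz)) ty tH);
  (-10, Malcev tx (tH ⋅ (tG ⋅ tz)) ty tH);
  (6, Malcev (tE ⋅ tx) tz (tG ⋅ ty) tG);
  (-5, Malcev (tG ⋅ tx) tz (tE ⋅ ty) tG);
  (-1, Malcev (tG ⋅ tx) tz (tG ⋅ ty) tE);
  (6, Malcev (tG ⋅ tx) tz (tH ⋅ ty) tH);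
  (-5, Malcev (tH ⋅ tx) tz (tG ⋅ ty) tH);
  (-1, Malcev (tH ⋅ tx) tz (tH ⋅ ty) tG);
  (14, Malcev (tE ⋅ tx) (tG ⋅ tz) ty tG);
  (-5, Malcev (tG ⋅ tx) (tE ⋅ tz) ty tG);
  (-9, Malcev (tG ⋅ tx) (tG ⋅ tz) ty tE);
  (14, Malcev (tG ⋅ tx) (tH ⋅ tz) ty tH);
  (-5, Malcev (tH ⋅ tx) (tG ⋅ tz) ty tH);
  (-9, Malcev (tH ⋅ tx) (tH ⋅ tz) ty tG);
  (-4, Malcev (tE ⋅ (tG ⋅ tx)) tz ty tG);
  (14, Malcev (tG ⋅ (tE ⋅ tx)) tz ty tG);
  (-10, Malcev (tG ⋅ (tG ⋅ tx)) tz ty tE);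
  (10, Malcev (tH ⋅ (tG ⋅ tx)) tz ty tH);
  (-10, Malcev (tH ⋅ (tH ⋅ tx)) tz ty tG);
  (-10, Malcev tx tE (tG ⋅ (ty ⋅ tz)) tG);
  (-14, Malcev tx tE (ty ⋅ (tG ⋅ tz)) tG);
  (6, Malcev tx tE (tz ⋅ (tG ⋅ ty)) tG);
  (10, Malcev tx tH (tH ⋅ (ty ⋅ tz)) tG);
  (14, Malcev tx tH (ty ⋅ (tH ⋅ tz)) tG);
  (-6, Malcev tx tH (tz ⋅ (tH ⋅ ty)) tG);
  (-10, Malcev (tE ⋅ tx) tG (ty ⋅ tz) tG);
  (5, Malcev (tG ⋅ tx) tE (ty ⋅ tz) tG);
  (-10, Malcev (tG ⋅ tx) tH (ty ⋅ tz) tH);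
  (5, Malcev (tH ⋅ tx) tH (ty ⋅ tz) tG);
  (10, Malcev (tH ⋅ tx) tG (ty ⋅ tz) tH);
  (14, Malcev (tE ⋅ tx) tG ty (tG ⋅ tz));
  (-14, Malcev (tG ⋅ tx) tE ty (tG ⋅ tz));
  (14, Malcev (tG ⋅ tx) tH ty (tH ⋅ tz));
  (-14, Malcev (tH ⋅ tx) tG ty (tH ⋅ tz));
  (6, Malcev (tE ⋅ tx) tG (tG ⋅ ty) tz);
  (-6, Malcev (tG ⋅ tx) tE (tG ⋅ ty) tz);
  (6, Malcev (tG ⋅ tx) tH (tH ⋅ ty) tz);
  (-6, Malcev (tH ⋅ tx) tG (tH ⋅ ty) tz);
  (-5, Malcev (tE ⋅ (tG ⋅ tx)) tG ty tz);
  (10, Malcev (tG ⋅ (tE ⋅ tx)) tG ty tz);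
  (-5, Malcev (tG ⋅ (tG ⋅ tx)) tE ty tz);
  (-5, Malcev (tG ⋅ (tH ⋅ tx)) tH ty tz);
  (10, Malcev (tH ⋅ (tG ⋅ tx)) tH ty tz);
  (-5, Malcev (tH ⋅ (tH ⋅ tx)) tG ty tz);
  (6, Malcev (tG ⋅ (tx ⋅ tz)) tE tG ty);
  (-6, Malcev (tH ⋅ (tx ⋅ tz)) tH tG ty);
  (-10, Malcev (tx ⋅ (tG ⋅ tz)) tE tG ty);
  (10, Malcev (tx ⋅ (tH ⋅ tz)) tH tG ty);
  (-15, Malcev (tz ⋅ (tG ⋅ tx)) tE tG ty);
  (15, Malcev (tz ⋅ (tH ⋅ tx)) tH tG ty);
  (6, Malcev tx tz tH (tG ⋅ (tH ⋅ ty)));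
  (-6, Malcev tx tz tH (tH ⋅ (tG ⋅ ty)));
  (6, Malcev tx tz tG (tE ⋅ (tG ⋅ ty)));
  (-6, Malcev tx tz tG (tG ⋅ (tE ⋅ ty)));
  (-10, Malcev tx (tE ⋅ tz) tG (tG ⋅ ty));
  (10, Malcev tx (tG ⋅ tz) tE (tG ⋅ ty));
  (-10, Malcev tx (tG ⋅ tz) tH (tH ⋅ ty));
  (10, Malcev tx (tH ⋅ tz) tG (tH ⋅ ty));
  (-5, Malcev (tG ⋅ tx) tz tE (tG ⋅ ty));
  (5, Malcev (tG ⋅ tx) tz tG (tE ⋅ ty));
  (5, Malcev (tH ⋅ tx) tz tH (tG ⋅ ty));
  (-5, Malcev (tH ⋅ tx) tz tG (tH ⋅ ty));
  (-19, Malcev (tE ⋅ (tG ⋅ tx)) tz tG ty);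
  (24, Malcev (tG ⋅ (tE ⋅ tx)) tz tG ty);
  (-5, Malcev (tG ⋅ (tG ⋅ tx)) tz tE ty);
  (-19, Malcev (tG ⋅ (tH ⋅ tx)) tz tH ty);
  (24, Malcev (tH ⋅ (tG ⋅ tx)) tz tH ty);
  (-5, Malcev (tH ⋅ (tH ⋅ tx)) tz tG ty);
  (-10, Malcev tx tE tG (tG ⋅ (ty ⋅ tz)));
  (-14, Malcev tx tE tG (ty ⋅ (tG ⋅ tz)));
  (6, Malcev tx tE tG (tz ⋅ (tG ⋅ ty)));
  (10, Malcev tx tH tG (tH ⋅ (ty ⋅ tz)));
  (14, Malcev tx tH tG (ty ⋅ (tH ⋅ tz)));
  (-6, Malcev tx tH tG (tz ⋅ (tH ⋅ ty)));
  (-5, Malcev (tG ⋅ tx) tE tG (ty ⋅ tz));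
  (5, Malcev (tH ⋅ tx) tH tG (ty ⋅ tz));
  (-24, RMul (Nucleus tx tE tG) (ty ⋅ (tG ⋅ tz)));
  (-4, RMul (Nucleus tx tE tG) (tz ⋅ (tG ⋅ ty)));
  (-4, RMul (Nucleus tx tH tG) (tH ⋅ (ty ⋅ tz)));
  (24, RMul (Nucleus tx tH tG) (ty ⋅ (tH ⋅ tz)));
  (4, RMul (Malcev tx tH tH tG) (ty ⋅ tz));
  (14, RMul (Malcev tx tH tG tH) (ty ⋅ tz));
  (10, RMul (Malcev tx tG tE tG) (ty ⋅ tz));
  (-4, RMul (Nucleus ty tE tG) (tx ⋅ (tG ⋅ tz)));
  (-16, RMul (Nucleus ty tE tG) (tz ⋅ (tG ⋅ tx)));
  (4, RMul (Nucleus ty tH tG) (tx ⋅ (tH ⋅ tz)));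
  (16, RMul (Nucleus ty tH tG) (tz ⋅ (tH ⋅ tx)));
  (-6, RMul (Malcev ty tH tG tH) (tx ⋅ tz));
  (-6, RMul (Malcev ty tG tE tG) (tx ⋅ tz));
  (-20, RMul (Nucleus tz tE tG) (ty ⋅ (tG ⋅ tx)));
  (20, RMul (Nucleus tz tH tG) (ty ⋅ (tH ⋅ tx)));
  (-10, RMul (Malcev tz tH tG tH) (tx ⋅ ty));
  (-10, RMul (Malcev tz tG tE tG) (tx ⋅ ty));
  (14, RMul (Malcev tx ty tE tG) (tG ⋅ tz));
  (-14, RMul (Malcev tx ty tH tG) (tH ⋅ tz));
  (10, RMul (Malcev tx ty tG tE) (tG ⋅ tz));
  (-10, RMul (Malcev tx ty tG tH) (tH ⋅ tz));
  (24, RMul (Malcev tx tE ty tG) (tG ⋅ tz));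
  (-10, RMul (Malcev tx tH ty tH) (tG ⋅ tz));
  (-14, RMul (Malcev tx tH ty tG) (tH ⋅ tz));
  (10, RMul (Malcev tx tG ty tE) (tG ⋅ tz));
  (-10, RMul (Malcev tx tG ty tG) (tE ⋅ tz));
  (24, RMul (Malcev tx tE tG ty) (tG ⋅ tz));
  (-24, RMul (Malcev tx tH tG ty) (tH ⋅ tz));
  (4, RMul (RMul (Nucleus tx tE tG) ty) (tG ⋅ tz));
  (-4, RMul (RMul (Nucleus ty tE tG) tx) (tG ⋅ tz));
  (4, RMul (RMul (Nucleus ty tH tG) tx) (tH ⋅ tz));
  (-4, RMul (Malcev tx (tG ⋅ ty) tE tG) tz);
  (4, RMul (Malcev tx (tH ⋅ ty) tH tG) tz);
  (-4, RMul (Malcev tx tE (tG ⋅ ty) tG) tz);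
  (4, RMul (Malcev tx tH (tH ⋅ ty) tG) tz);
  (-10, RMul (Malcev (tE ⋅ tx) tG ty tG) tz);
  (20, RMul (Malcev (tG ⋅ tx) tE ty tG) tz);
  (-10, RMul (Malcev (tG ⋅ tx) tH ty tH) tz);
  (-10, RMul (Malcev (tG ⋅ tx) tG ty tE) tz);
  (-10, RMul (Malcev (tH ⋅ tx) tH ty tG) tz);
  (20, RMul (Malcev (tH ⋅ tx) tG ty tH) tz);
  (-4, RMul (Malcev tx tE tG (tG ⋅ ty)) tz);
  (4, RMul (Malcev tx tH tG (tH ⋅ ty)) tz);
  (-20, RMul (RMul (Nucleus tx tE tG) (tG ⋅ ty)) tz);
  (24, RMul (RMul (Nucleus tx tH tG) (tH ⋅ ty)) tz);
  (24, RMul (RMul (Malcev tx tE tG tG) ty) tz);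
  (-24, RMul (RMul (Malcev tx tH tH tG) ty) tz);
  (-4, RMul (RMul (Malcev tx tH tG tH) ty) tz);
  (20, RMul (RMul (Malcev tx tG tE tG) ty) tz);
  (-4, RMul (RMul (Nucleus ty tE tG) (tG ⋅ tx)) tz);
  (4, RMul (RMul (Nucleus ty tH tG) (tH ⋅ tx)) tz);
  (24, RMul (RMul (RMul (Nucleus tx tE tG) ty) tG) tz);
  (-20, RMul (RMul (RMul (Nucleus tx tH tG) ty) tH) tz);
  (-6, RMul (Malcev tx tz tE tG) (tG ⋅ ty));
  (6, RMul (Malcev tx tz tH tG) (tH ⋅ ty));
  (6, RMul (Malcev tx tz tG tE) (tG ⋅ ty));
  (-6, RMul (Malcev tx tz tG tH) (tH ⋅ ty));
  (-10, RMul (Malcev tx tH tz tH) (tG ⋅ ty));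
  (10, RMul (Malcev tx tH tz tG) (tH ⋅ ty));
  (10, RMul (Malcev tx tG tz tE) (tG ⋅ ty));
  (-10, RMul (Malcev tx tG tz tG) (tE ⋅ ty));
  (20, RMul (RMul (Nucleus tx tE tG) tz) (tG ⋅ ty));
  (-20, RMul (RMul (Nucleus tx tH tG) tz) (tH ⋅ ty));
  (4, RMul (RMul (Nucleus tz tE tG) tx) (tG ⋅ ty));
  (-4, RMul (RMul (Nucleus tz tH tG) tx) (tH ⋅ ty));
  (14, RMul (Malcev (tE ⋅ tx) tG tz tG) ty);
  (-14, RMul (Malcev (tG ⋅ tx) tE tz tG) ty);
  (14, RMul (Malcev (tG ⋅ tx) tH tz tH) ty);
  (-14, RMul (Malcev (tH ⋅ tx) tG tz tH) ty);
  (24, RMul (RMul (Nucleus tx tE tG) (tG ⋅ tz)) ty);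
  (-28, RMul (RMul (Nucleus tx tH tG) (tH ⋅ tz)) ty);
  (4, RMul (RMul (Malcev tx tH tH tG) tz) ty);
  (-4, RMul (RMul (Malcev tx tG tE tG) tz) ty);
  (24, RMul (RMul (Nucleus tz tE tG) (tG ⋅ tx)) ty);
  (-24, RMul (RMul (Nucleus tz tH tG) (tH ⋅ tx)) ty);
  (10, RMul (Malcev ty tz tE tG) (tG ⋅ tx));
  (-10, RMul (Malcev ty tz tH tG) (tH ⋅ tx));
  (-10, RMul (Malcev ty tz tG tE) (tG ⋅ tx));
  (10, RMul (Malcev ty tz tG tH) (tH ⋅ tx));
  (-16, RMul (RMul (Nucleus ty tE tG) tz) (tG ⋅ tx));
  (16, RMul (RMul (Nucleus ty tH tG) tz) (tH ⋅ tx));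
  (4, RMul (RMul (Nucleus ty tE tG) (tG ⋅ tz)) tx);
  (-4, RMul (RMul (Nucleus ty tH tG) (tH ⋅ tz)) tx)].

Lemma certificate_E_ok : certifies certificate_E (jacobian_times tE).
Proof. by vm_compute. Qed.

Lemma certificate_H_ok : certifies certificate_H (jacobian_times tH).
Proof. by vm_compute. Qed.

Lemma certificate_G_ok : certifies certificate_G (jacobian_times tG).
Proof. by vm_compute. Qed.

Section JacobianOfNucleus.
Variables (F : fieldType) (M : lmodType F) (mul : M -> M -> M) (e h f x y z : M).
Hypothesis char2 : 2 \notin [pchar F].
Hypotheses (mulB : bilinear_prod mul) (mulA : anticomm mul).
Hypothesis malcevM : malcev_identity mul.
Hypotheses (mul_eh : mul e h = e) (mul_fh : mul f h = - f).
Hypothesis mul_ef : mul e f = 2%:R^-1 *: h.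
Hypotheses (Nx : N_M mul e h f x) (Ny : N_M mul e h f y) (Nz : N_M mul e h f z).

Let two_neq0 : (2%:R : F) != 0.
Proof. by rewrite natf_neq0_pchar pnatE. Qed.

Definition sl2_env : nat -> M := nth 0 [:: x; y; z; e; h; 2%:R *: f].

Lemma sl2_env_table i j : is_sl2 i -> is_sl2 j ->
  eval_monomial mul sl2_env (sl2_table i j) = mul (sl2_env i) (sl2_env j).
Proof.
have mul_gh : mul (2%:R *: f) h = - (2%:R *: f) by rewrite (mulZl mulB) mul_fh scalerN.
have mul_eg : mul e (2%:R *: f) = h by rewrite (mulZr mulB) mul_ef scalerA mulfV ?scale1r.
rewrite /is_sl2; case: i => [|[|[|[|[|[|i]]]]]] //; case: j => [|[|[|[|[|[|j]]]]]] // _ _;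
  rewrite /= ?mulA ?mulr1z ?mulrN1z //.
- by rewrite (mul_anticomm mulB mulA) mul_eh.
- by rewrite (mul_anticomm mulB mulA) mul_gh opprK.
- by rewrite (mul_anticomm mulB mulA) mul_eg.
Qed.

Lemma sl2_env_span j : is_sl2 j -> in_span3 e h f (sl2_env j).
Proof.
rewrite /is_sl2; case: j => [|[|[|[|[|[|j]]]]]] // _ /=.
- by exists 1, 0, 0; rewrite scale1r !scale0r !addr0.
- by exists 0, 1, 0; rewrite scale1r !scale0r add0r addr0.
- by exists 0, 0, 2%:R; rewrite !scale0r !add0r.
Qed.

Lemma sl2_env_nucleus i j k : (i < 3)%N -> is_sl2 j -> is_sl2 k ->
  jacobian mul (sl2_env i) (sl2_env j) (sl2_env k) = 0.
Proof.
move=> + /sl2_env_span Lj /sl2_env_span Lk; case: i => [|[|[|i]]] // _.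
- exact: Nx.
- exact: Ny.
- exact: Nz.
Qed.

Lemma jacobian_mul_certified C a : certifies C (jacobian_times a) ->
  mul (jacobian mul x y z) (eval mul sl2_env a) = 0.
Proof.
move/(certifies_sound mulB mulA sl2_env_table malcevM sl2_env_nucleus).
rewrite (eval_jacobian_times _ _ mulB) -scaler_int => /eqP; rewrite scaler_eq0.
have -> : ((-8 : int)%:~R : F) = - (2%:R ^+ 3) by rewrite -natrX mulrNz.
by rewrite oppr_eq0 expf_eq0 (negbTE two_neq0) andbF => /eqP.
Qed.

Lemma jacobian_annihilated_by_sl2 a : in_span3 e h f a -> mul (jacobian mul x y z) a = 0.
Proof.
have J_e : mul (jacobian mul x y z) e = 0 := jacobian_mul_certified certificate_E_ok.
have J_h : mul (jacobian mul x y z) h = 0 := jacobian_mul_certified certificate_H_ok.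
have J_f : mul (jacobian mul x y z) f = 0.
  have : 2%:R *: mul (jacobian mul x y z) f = 0.
    by rewrite -(mulZr mulB); exact: jacobian_mul_certified certificate_G_ok.
  by move/eqP; rewrite scaler_eq0 (negbTE two_neq0) => /eqP.
case=> [a1 [a2 [a3 ->]]].
by rewrite !(mulDr mulB) !(mulZr mulB) J_e J_h J_f !scaler0 !addr0.
Qed.

End JacobianOfNucleus.

Theorem mainTheorem3 (F : fieldType) (M : lmodType F) (mul : M -> M -> M)
    (e h f : M) :
  2 \notin [pchar F] -> 3 \notin [pchar F] ->
  in_variety_H mul ->
  sl2_triple mul e h f ->
  (forall m : M, m != 0 -> exists a : M, in_span3 e h f a /\ mul m a != 0) ->
  forall x y z : M, N_M mul e h f x -> N_M mul e h f y -> N_M mul e h f z ->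
    jacobian mul x y z = 0.
Proof.
move=> char2 _ [[mulB mulA malcevM] _] [_ mul_eh mul_fh mul_ef] nondeg x y z Nx Ny Nz.
apply/eqP/negPn/negP => /nondeg [a [La]].
by rewrite (jacobian_annihilated_by_sl2 char2 mulB mulA malcevM mul_eh mul_fh mul_ef
  Nx Ny Nz La) eqxx.
Qed.
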